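(* Let $\varphi\colon\mathbb{D}\to\mathbb{D}$ be analytic and fix $a>0$. For $\delta,\kappa,\lambda,r>0$ (with $r$ small) set \[I(\delta,\kappa,\lambda,r)=\frac{1}{2\pi}\int_{\kappa ra-\lambda r}^{\kappa ra+\lambda r}\bigl|(C_\varphi f_{(1-r)e^{i\kappa r}})((1-\delta r)e^{it})\bigr|^2\,dt .\] (1) If $\tau_{\varphi,1}(\{1\})=a$, then $\lim_{r\to0^+}I(\delta,\kappa,\lambda,r)=\dfrac{a\,c(\delta,\lambda)}{1+\delta/a}$, where $c(\delta,\lambda)$ does not depend on $\kappa$, satisfies $0<c(\delta,\lambda)<1$, and $\lim_{\lambda\to\infty}c(\delta,\lambda)=1$ for every $\delta>0$. (2) If $\tau_{\varphi,1}(\{1\})\ne a$, then $\lim_{r\to0^+}I(\delta,\kappa,\lambda,r)=\varepsilon(\delta,\kappa,\lambda)$ exists and $\lim_{\kappa\to\infty}\varepsilon(\delta,\kappa,\lambda)=0$ for all $\delta,\lambda>0$.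
   Context: $\mathbb{D}$ is the open unit disc, $\mathbb{T}=\partial\mathbb{D}$, $P_z(\zeta)=(1-|z|^2)/|\zeta-z|^2$. For $w\in\mathbb{D}$, $f_w(z)=\sqrt{1-|w|^2}/(1-\overline{w}z)$ is the normalized reproducing kernel of $\mathcal{H}^2$, and $C_\varphi f=f\circ\varphi$. For $\alpha\in\mathbb{T}$, the Aleksandrov–Clark measure $\tau_{\varphi,\alpha}$ is the unique positive Borel measure on $\mathbb{T}$ with $\frac{1-|\varphi(z)|^2}{|\alpha-\varphi(z)|^2}=\int_{\mathbb{T}}P_z\,d\tau_{\varphi,\alpha}$ for all $z\in\mathbb{D}$. *)

From Stdlib Require Import Reals Lra.
Open Scope R_scope.

Definition Cx := (R * R)%type.
Definition RtoC (x : R) : Cx := (x, 0).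
Definition Cadd (z w : Cx) : Cx := (fst z + fst w, snd z + snd w).
Definition Copp (z : Cx) : Cx := (- fst z, - snd z).
Definition Csub (z w : Cx) : Cx := Cadd z (Copp w).
Definition Cmul (z w : Cx) : Cx :=
  (fst z * fst w - snd z * snd w, fst z * snd w + snd z * fst w).
Definition Cconj (z : Cx) : Cx := (fst z, - snd z).
Definition Cnorm2 (z : Cx) : R := fst z * fst z + snd z * snd z.
Definition Cabs (z : Cx) : R := sqrt (Cnorm2 z).
Definition Cinv (z : Cx) : Cx := (fst z / Cnorm2 z, - snd z / Cnorm2 z).
Definition Cdiv (z w : Cx) : Cx := Cmul z (Cinv w).
Definition polar (rho t : R) : Cx := (rho * cos t, rho * sin t).

Definition analytic_on_disc (phi : Cx -> Cx) : Prop :=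
  forall z, Cabs z < 1 -> exists L : Cx,
    forall eps, 0 < eps -> exists d, 0 < d /\
      forall h, h <> (0, 0) -> Cabs h < d -> Cabs (Cadd z h) < 1 ->
        Cabs (Csub (Cdiv (Csub (phi (Cadd z h)) (phi z)) h) L) < eps.

Definition maps_disc_to_disc (phi : Cx -> Cx) : Prop :=
  forall z, Cabs z < 1 -> Cabs (phi z) < 1.

Definition Poisson (z zeta : Cx) : R := (1 - Cnorm2 z) / Cnorm2 (Csub zeta z).

Definition kernel (w z : Cx) : Cx :=
  Cdiv (RtoC (sqrt (1 - Cnorm2 w))) (Csub (RtoC 1) (Cmul (Cconj w) z)).

(* Real continuous functions on T, parametrized by the angle theta (e^{i theta}). *)
Definition circle_fun (g : R -> R) : Prop :=
  continuity g /\ forall th, g (th + 2 * PI) = g th.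

(* Positive Borel measures on T are represented (Riesz–Markov) by positive
   linear functionals on C(T): Lam g = \int g dmu. *)
Definition positive_functional (Lam : (R -> R) -> R) : Prop :=
  (forall f g, circle_fun f -> circle_fun g ->
     Lam (fun th => f th + g th) = Lam f + Lam g) /\
  (forall c f, circle_fun f -> Lam (fun th => c * f th) = c * Lam f) /\
  (forall f, circle_fun f -> (forall th, 0 <= f th) -> 0 <= Lam f).

(* Lam represents the Aleksandrov–Clark measure tau_{phi,alpha} *)
Definition is_clark_functional (phi : Cx -> Cx) (alpha : Cx) (Lam : (R -> R) -> R) : Prop :=
  positive_functional Lam /\
  forall z, Cabs z < 1 ->
    Lam (fun th => Poisson z (polar 1 th)) =
      (1 - Cnorm2 (phi z)) / Cnorm2 (Csub alpha (phi z)).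

(* m = mu({1}) = inf { \int g dmu : g in C(T), 0 <= g <= 1, g(1) = 1 } *)
Definition point_mass_at_1 (Lam : (R -> R) -> R) (m : R) : Prop :=
  (forall g, circle_fun g -> (forall th, 0 <= g th <= 1) -> g 0 = 1 -> m <= Lam g) /\
  (forall m', (forall g, circle_fun g -> (forall th, 0 <= g th <= 1) -> g 0 = 1 ->
                 m' <= Lam g) -> m' <= m).

Definition I_integrand (phi : Cx -> Cx) (delta kappa r : R) (t : R) : R :=
  Cnorm2 (kernel (polar (1 - r) (kappa * r)) (phi (polar (1 - delta * r) t))).

Definition I_tends_to (phi : Cx -> Cx) (a delta kappa lambda L : R) : Prop :=
  forall eps, 0 < eps -> exists r0, 0 < r0 /\
    forall r, 0 < r < r0 ->
      exists pr : Riemann_integrable (I_integrand phi delta kappa r)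
                    (kappa * r * a - lambda * r) (kappa * r * a + lambda * r),
        Rabs (/ (2 * PI) * RiemannInt pr - L) < eps.

From Coquelicot Require Import Coquelicot.
From Stdlib Require Import Reals Lra Psatz FunctionalExtensionality Classical ZArith.
From Pilot Require Import Defs.
Open Scope R_scope.

(** Write [F = (1 + phi) / (1 - phi)] and [tau = tau_{phi,1}] with [m = tau({1})].  The Clark
    identity says that [Re F] is the Poisson integral of [tau], so [F] differs from the Herglotz
    integral [H(z) = \int (zeta + z) / (zeta - z) dtau(zeta)] by an imaginary constant (an
    analytic function with vanishing real part is constant).  Removing the atom,
    [E = H - m (1 + z) / (1 - z)] is the Herglotz integral of a measure without mass at [1], hence
    [(1 - |z|) |E(z)| -> 0] as [z -> 1].  With [z = (1 - delta r) e^{irs}] and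
    [w = (1 - r) e^{i kappa r}] one has [|f_w(phi z)|^2 = (1 - |w|^2) / |1 - conj w phi(z)|^2], and
    the expansion of [phi] near [1] shows that [r] times this converges, uniformly for [s] in
    compact sets, to the Lorentzian [2 m^2 / ((m + delta)^2 + (m kappa - s)^2)].  Integrating over
    [s] in [[kappa a - lambda, kappa a + lambda]] yields the limit
    [m^2 / (pi (m + delta)) (atan ((kappa (a - m) + lambda) / (m + delta))
                          - atan ((kappa (a - m) - lambda) / (m + delta)))],
    which for [m = a] equals [a c / (1 + delta / a)] with [c = 2 / pi atan (lambda / (a + delta))],
    and for [m <> a] tends to [0] as [kappa -> oo] because both arguments of [atan] tend to the same
    infinity. *)

(** * Complex numbers *)

(* [Defs] shadows Coquelicot's [Cinv], [Cdiv], [Cconj], [RtoC] with its own versions on [R * R];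
   the lemmas below identify the two. *)
Notation CC := Complex.C.
Notation RC := Complex.RtoC.

Lemma Cinv_Complex (z : CC) : Defs.Cinv z = Complex.Cinv z.
Proof. unfold Defs.Cinv, Complex.Cinv, Cnorm2. simpl. f_equal; f_equal; ring. Qed.
Lemma Cdiv_Complex (z w : CC) : Defs.Cdiv z w = Complex.Cdiv z w.
Proof. unfold Defs.Cdiv, Complex.Cdiv. rewrite Cinv_Complex. reflexivity. Qed.
Lemma Cabs_Cmod (z : CC) : Cabs z = Cmod z.
Proof. unfold Cabs, Cmod, Cnorm2. f_equal. simpl. ring. Qed.
Lemma maps_disc_Cmod phi : maps_disc_to_disc phi -> forall z, Cmod z < 1 -> Cmod (phi z) < 1.
Proof. intros Hs z Hz. rewrite <- Cabs_Cmod. apply Hs. now rewrite Cabs_Cmod. Qed.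
Lemma Cnorm2_Cmod (z : CC) : Cnorm2 z = Cmod z * Cmod z.
Proof. unfold Cnorm2, Cmod. rewrite sqrt_sqrt. simpl; ring.
  apply Rplus_le_le_0_compat; apply pow2_ge_0. Qed.

Lemma Cmod_le_Rabs_sum (z : CC) : Cmod z <= Rabs (fst z) + Rabs (snd z).
Proof.
  unfold Cmod. apply Rsqr_incr_0_var.
  - rewrite Rsqr_sqrt by (apply Rplus_le_le_0_compat; apply pow2_ge_0).
    unfold Rsqr. 
    assert (E1 : Rabs (fst z) * Rabs (fst z) = fst z * fst z) by (rewrite <- Rabs_mult; apply Rabs_right; nra).
    assert (E2 : Rabs (snd z) * Rabs (snd z) = snd z * snd z) by (rewrite <- Rabs_mult; apply Rabs_right; nra).
    assert (0 <= Rabs (fst z) * Rabs (snd z)) by (apply Rmult_le_pos; apply Rabs_pos).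
    simpl. nra.
  - apply Rplus_le_le_0_compat; apply Rabs_pos.
Qed.
Lemma im_le_Cmod (z : CC) : Rabs (snd z) <= Cmod z.
Proof. generalize (Rmax_Cmod z). intros H. eapply Rle_trans; [|exact H]. apply Rmax_r. Qed.

Lemma Cmod_minus_sym (x y : CC) : Cmod (x - y)%C = Cmod (y - x)%C.
Proof. replace (y - x)%C with (- (x - y))%C by ring. now rewrite Cmod_opp. Qed.
Lemma Cmod_triangle_minus (x y : CC) : Cmod x - Cmod y <= Cmod (x - y)%C.
Proof. generalize (Cmod_triangle (x - y)%C y). replace (x - y + y)%C with x by ring. lra. Qed.

Lemma Cmult_neq0 (x y : CC) : x <> RC 0 -> y <> RC 0 -> (x * y)%C <> RC 0.
Proof. intros Hx Hy Z. apply Cmod_gt_0 in Hx. apply Cmod_gt_0 in Hy.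
  assert (Cmod (x*y)%C = 0) by (rewrite Z; apply Cmod_0). rewrite Cmod_mult in H.
  nra. Qed.
Lemma Cmod_gt0_neq0 (x : CC) : 0 < Cmod x -> x <> RC 0.
Proof. intros H Z. rewrite Z, Cmod_0 in H. lra. Qed.
Lemma Cinv_neq0 (x : CC) : x <> RC 0 -> (/ x)%C <> RC 0.
Proof. intros H. apply Cmod_gt0_neq0. rewrite Cmod_inv by auto. apply Rinv_0_lt_compat. apply Cmod_gt_0; auto. Qed.
Lemma RC_neq0 r : r <> 0 -> RC r <> RC 0.
Proof. intros H Z. apply H. injection Z. auto. Qed.
Lemma RC_mult x y : RC (x * y) = (RC x * RC y)%C.
Proof. unfold Complex.RtoC, Cmult. simpl. f_equal; ring. Qed.
Lemma Cdiv_RC (x : CC) r : r <> 0 -> (x / RC r)%C = (fst x / r, snd x / r).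
Proof. intros H. destruct x as [p q]. unfold Complex.Cdiv, Complex.Cinv, Cmult, Complex.RtoC. simpl.
  f_equal; field; auto. Qed.
Lemma Cmod_polar rho t : Cmod (polar rho t) = Rabs rho.
Proof. unfold Cmod, polar; simpl. replace (rho * cos t * (rho * cos t * 1) + rho * sin t * (rho * sin t * 1))
  with (rho * rho) by (generalize (sin2_cos2 t); unfold Rsqr; intro; nra).
  apply sqrt_Rsqr_abs. Qed.
Lemma Cmod_imag e : 0 <= e -> Cmod (0, e) = e.
Proof. intros. unfold Cmod; simpl. replace (0 * (0 * 1) + e * (e * 1)) with (e * e) by ring. apply sqrt_square; lra. Qed.
Lemma Cmod_real e : 0 <= e -> Cmod (RC e) = e.
Proof. intros. rewrite Cmod_R, Rabs_right; lra. Qed.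

(** * Uniform limits as [r -> 0+] *)

Definition ulim {X : Type} (P : R -> X -> Prop) (f : R -> X -> CC) (g : X -> CC) : Prop :=
  forall eps, 0 < eps -> exists d, 0 < d /\
    forall r x, 0 < r < d -> P r x -> Cmod (f r x - g x)%C < eps.
Definition ubnd {X : Type} (P : R -> X -> Prop) (g : X -> CC) : Prop :=
  exists M, forall r x, P r x -> Cmod (g x) <= M.

Lemma ulim_ext {X} (P : R -> X -> Prop) f f' g :
  (forall r x, 0 < r -> P r x -> f r x = f' r x) -> ulim P f g -> ulim P f' g.
Proof.
  intros E H eps He. destruct (H eps He) as [d [Hd H1]]. exists d; split; auto.
  intros r x Hr Hp. rewrite <- (E r x) by (tauto || lra). auto.
Qed.
Lemma ulim_ext_loc {X} (P : R -> X -> Prop) f f' g r1 : 0 < r1 ->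
  (forall r x, 0 < r < r1 -> P r x -> f r x = f' r x) -> ulim P f g -> ulim P f' g.
Proof. intros H1 E H eps He. destruct (H eps He) as [d [Hd K]]. exists (Rmin d r1). split.
  apply Rmin_pos; auto. intros r x Hr Hp.
  assert (r < d) by (generalize (Rmin_l d r1); lra). assert (r < r1) by (generalize (Rmin_r d r1); lra).
  rewrite <- (E r x) by (auto; lra). apply K; auto; lra. Qed.
Lemma ulim_ext_lim {X} (P : R -> X -> Prop) f g g' :
  (forall r x, P r x -> g x = g' x) -> ulim P f g -> ulim P f g'.
Proof.
  intros E H eps He. destruct (H eps He) as [d [Hd H1]]. exists d; split; auto.
  intros r x Hr Hp. rewrite <- (E r x) by auto. auto.
Qed.
Lemma ulim_from_bound {X} (P : R -> X -> Prop) f g K r1 : 0 < r1 ->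
  (forall r x, 0 < r < r1 -> P r x -> Cmod (f r x - g x)%C <= K * r) -> ulim P f g.
Proof. intros H1 H eps He. exists (Rmin r1 (eps / (Rabs K + 1))). split.
  apply Rmin_pos; auto. apply Rdiv_lt_0_compat; auto. generalize (Rabs_pos K); lra.
  intros r x Hr Hp. assert (r < r1) by (generalize (Rmin_l r1 (eps / (Rabs K + 1))); lra).
  assert (r < eps / (Rabs K + 1)) by (generalize (Rmin_r r1 (eps / (Rabs K + 1))); lra).
  eapply Rle_lt_trans. apply H; auto. lra.
  apply Rle_lt_trans with ((Rabs K + 1) * r).
  apply Rmult_le_compat_r. lra. generalize (Rle_abs K); lra.
  apply Rmult_lt_reg_r with (/ (Rabs K + 1)). apply Rinv_0_lt_compat. generalize (Rabs_pos K); lra.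
  replace ((Rabs K + 1) * r * / (Rabs K + 1)) with r by (field; generalize (Rabs_pos K); lra).
  replace (eps * / (Rabs K + 1)) with (eps / (Rabs K + 1)) by reflexivity. lra. Qed.
Lemma ulim_const {X} (P : R -> X -> Prop) (g : X -> CC) :
  ulim P (fun _ x => g x) g.
Proof. intros eps He. exists 1; split; [lra|]. intros. replace (g x - g x)%C with (RC 0) by ring.
  rewrite Cmod_0. lra. Qed.
Lemma ulim_id {X} (P : R -> X -> Prop) :
  ulim P (fun r _ => RC r) (fun _ => 0%C).
Proof. intros eps He. exists eps; split; auto. intros r x Hr _.
  replace (RC r - 0)%C with (RC r) by ring. rewrite Cmod_R. rewrite Rabs_right; lra. Qed.
Lemma ulim_plus {X} (P : R -> X -> Prop) f1 f2 g1 g2 :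
  ulim P f1 g1 -> ulim P f2 g2 -> ulim P (fun r x => f1 r x + f2 r x)%C (fun x => g1 x + g2 x)%C.
Proof.
  intros H1 H2 eps He.
  destruct (H1 (eps/2)) as [d1 [Hd1 K1]]; [lra|].
  destruct (H2 (eps/2)) as [d2 [Hd2 K2]]; [lra|].
  exists (Rmin d1 d2); split; [now apply Rmin_pos|].
  intros r x Hr Hp. assert (r < d1) by (eapply Rlt_le_trans; [apply Hr|apply Rmin_l]).
  assert (r < d2) by (eapply Rlt_le_trans; [apply Hr|apply Rmin_r]).
  specialize (K1 r x ltac:(lra) Hp). specialize (K2 r x ltac:(lra) Hp).
  replace (f1 r x + f2 r x - (g1 x + g2 x))%C with ((f1 r x - g1 x) + (f2 r x - g2 x))%C by ring.
  eapply Rle_lt_trans. apply Cmod_triangle. lra.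
Qed.
Lemma ulim_opp {X} (P : R -> X -> Prop) f g :
  ulim P f g -> ulim P (fun r x => - f r x)%C (fun x => - g x)%C.
Proof.
  intros H eps He. destruct (H eps He) as [d [Hd K]]. exists d; split; auto.
  intros r x Hr Hp. replace (- f r x - - g x)%C with (- (f r x - g x))%C by ring.
  rewrite Cmod_opp. auto.
Qed.
Lemma ulim_minus {X} (P : R -> X -> Prop) f1 f2 g1 g2 :
  ulim P f1 g1 -> ulim P f2 g2 -> ulim P (fun r x => f1 r x - f2 r x)%C (fun x => g1 x - g2 x)%C.
Proof. intros. unfold Cminus. apply ulim_plus; auto. apply ulim_opp; auto. Qed.

Lemma ulim_mult {X} (P : R -> X -> Prop) f1 f2 g1 g2 :
  ubnd P g1 -> ubnd P g2 ->
  ulim P f1 g1 -> ulim P f2 g2 -> ulim P (fun r x => f1 r x * f2 r x)%C (fun x => g1 x * g2 x)%C.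
Proof.
  intros [M1 B1] [M2 B2] H1 H2 eps He.
  set (A1 := Rabs M1 + 1). set (A2 := Rabs M2 + 2).
  assert (0 < A1) by (unfold A1; generalize (Rabs_pos M1); lra).
  assert (0 < A2) by (unfold A2; generalize (Rabs_pos M2); lra).
  destruct (H1 (eps/(2*A2))) as [d1 [Hd1 K1]]. apply Rdiv_lt_0_compat; lra.
  destruct (H2 (Rmin 1 (eps/(2*A1)))) as [d2 [Hd2 K2]]. apply Rmin_pos; [lra|apply Rdiv_lt_0_compat; lra].
  exists (Rmin d1 d2); split; [now apply Rmin_pos|].
  intros r x Hr Hp. assert (r < d1) by (eapply Rlt_le_trans; [apply Hr|apply Rmin_l]).
  assert (r < d2) by (eapply Rlt_le_trans; [apply Hr|apply Rmin_r]).
  specialize (K1 r x ltac:(lra) Hp). specialize (K2 r x ltac:(lra) Hp).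
  specialize (B1 r x Hp). specialize (B2 r x Hp).
  assert (K2a : Cmod (f2 r x - g2 x)%C < 1) by (eapply Rlt_le_trans; [apply K2|apply Rmin_l]).
  assert (K2b : Cmod (f2 r x - g2 x)%C < eps/(2*A1)) by (eapply Rlt_le_trans; [apply K2|apply Rmin_r]).
  assert (F2 : Cmod (f2 r x) <= A2).
  { replace (f2 r x) with ((f2 r x - g2 x) + g2 x)%C by ring.
    eapply Rle_trans. apply Cmod_triangle. unfold A2. generalize (Rle_abs M2). lra. }
  replace (f1 r x * f2 r x - g1 x * g2 x)%C with ((f1 r x - g1 x) * f2 r x + g1 x * (f2 r x - g2 x))%C by ring.
  eapply Rle_lt_trans. apply Cmod_triangle. rewrite !Cmod_mult.
  assert (Cmod (g1 x) <= A1) by (unfold A1; generalize (Rle_abs M1); lra).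
  assert (Cmod (f1 r x - g1 x)%C * Cmod (f2 r x) <= eps/(2*A2) * A2).
  { apply Rmult_le_compat; try apply Cmod_ge_0; lra. }
  assert (Cmod (g1 x) * Cmod (f2 r x - g2 x)%C <= A1 * (eps/(2*A1))).
  { apply Rmult_le_compat; try apply Cmod_ge_0; lra. }
  assert (eps/(2*A2)*A2 = eps/2) by (field; lra).
  assert (E2 : A1*(eps/(2*A1)) = eps/2) by (field; lra).
  assert (Cmod (g1 x) * Cmod (f2 r x - g2 x)%C <= A1 * Cmod (f2 r x - g2 x)%C)
    by (apply Rmult_le_compat_r; [apply Cmod_ge_0|lra]).
  assert (A1 * Cmod (f2 r x - g2 x)%C < A1 * (eps/(2*A1))) by (apply Rmult_lt_compat_l; lra).
  lra.
Qed.

Lemma ulim_inv {X} (P : R -> X -> Prop) f g c :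
  0 < c -> (forall r x, P r x -> c <= Cmod (g x)) ->
  ulim P f g -> ulim P (fun r x => / f r x)%C (fun x => / g x)%C.
Proof.
  intros Hc B H eps He.
  destruct (H (Rmin (c/2) (eps * c * c / 2))) as [d [Hd K]].
  apply Rmin_pos; [lra|]. apply Rdiv_lt_0_compat; [|lra]. repeat apply Rmult_lt_0_compat; lra.
  exists d; split; auto. intros r x Hr Hp. specialize (K r x Hr Hp). specialize (B r x Hp).
  assert (K1 : Cmod (f r x - g x)%C < c/2) by (eapply Rlt_le_trans; [apply K|apply Rmin_l]).
  assert (K2 : Cmod (f r x - g x)%C < eps*c*c/2) by (eapply Rlt_le_trans; [apply K|apply Rmin_r]).
  assert (Fb : c/2 <= Cmod (f r x)).
  { generalize (Cmod_triangle_minus (g x) (f r x)). rewrite Cmod_minus_sym. lra. }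
  assert (f r x <> 0%C) by (intro Z; rewrite Z, Cmod_0 in Fb; lra).
  assert (g x <> 0%C) by (intro Z; rewrite Z, Cmod_0 in B; lra).
  replace (/ f r x - / g x)%C with ((g x - f r x) / (f r x * g x))%C by (field; auto).
  rewrite Cmod_div, Cmod_mult, Cmod_minus_sym.
  2:{ apply Cmult_neq0; auto. }
  apply Rlt_le_trans with ((eps*c*c/2) / (Cmod (f r x) * Cmod (g x))).
  - unfold Rdiv at 1 2. apply Rmult_lt_compat_r; auto.
    apply Rinv_0_lt_compat. apply Rmult_lt_0_compat; lra.
  - apply Rle_trans with ((eps*c*c/2) / (c/2 * c)).
    + unfold Rdiv. apply Rmult_le_compat_l. repeat apply Rmult_le_pos; lra.
      apply Rinv_le_contravar. apply Rmult_lt_0_compat; lra. apply Rmult_le_compat; lra.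
    + right. field. lra.
Qed.
Lemma ulim_conj {X} (P : R -> X -> Prop) f g : ulim P f g -> ulim P (fun r x => Complex.Cconj (f r x)) (fun x => Complex.Cconj (g x)).
Proof. intros H eps He. destruct (H eps He) as [d [Hd K]]. exists d; split; auto. intros r x Hr Hp.
  replace (Complex.Cconj (f r x) - Complex.Cconj (g x))%C with (Complex.Cconj (f r x - g x)) by
    (unfold Complex.Cconj, Cminus, Cplus, Complex.Copp; simpl; f_equal; ring).
  rewrite Cmod_conj. auto. Qed.

Lemma ubnd_const {X} (P : R -> X -> Prop) (c : CC) : ubnd P (fun _ => c).
Proof. exists (Cmod c). intros; lra. Qed.
Lemma ubnd_mult {X} (P : R -> X -> Prop) g1 g2 : ubnd P g1 -> ubnd P g2 -> ubnd P (fun x => g1 x * g2 x)%C.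
Proof. intros [M1 B1] [M2 B2]. exists (M1*M2). intros r x Hp. rewrite Cmod_mult.
  specialize (B1 r x Hp). specialize (B2 r x Hp). apply Rmult_le_compat; auto; apply Cmod_ge_0. Qed.

(** * Functions on the circle and positive functionals *)

Definition expi (t : R) : CC := (cos t, sin t).
Definition ccont (f : R -> CC) : Prop :=
  forall t, continuity_pt (fun s => fst (f s)) t /\ continuity_pt (fun s => snd (f s)) t.
Definition periodic (f : R -> CC) : Prop := forall t, f (t + 2 * PI) = f t.
Definition circle_cfun (f : R -> CC) : Prop := ccont f /\ periodic f.

Lemma ccont_const (c : CC) : ccont (fun _ => c).
Proof. intro t. split; apply continuity_pt_const; intros x y; reflexivity. Qed.
Lemma ccont_expi : ccont expi.
Proof. intro t. split; simpl. apply continuity_cos. apply continuity_sin. Qed.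
Lemma ccont_plus f g : ccont f -> ccont g -> ccont (fun t => f t + g t)%C.
Proof. intros Hf Hg t. destruct (Hf t), (Hg t). split; simpl.
  exact (continuity_pt_plus (fun s => fst (f s)) (fun s => fst (g s)) t H H1).
  exact (continuity_pt_plus (fun s => snd (f s)) (fun s => snd (g s)) t H0 H2). Qed.
Lemma ccont_opp f : ccont f -> ccont (fun t => - f t)%C.
Proof. intros Hf t. destruct (Hf t). split; simpl.
  exact (continuity_pt_opp (fun s => fst (f s)) t H).
  exact (continuity_pt_opp (fun s => snd (f s)) t H0). Qed.
Lemma ccont_minus f g : ccont f -> ccont g -> ccont (fun t => f t - g t)%C.
Proof. intros. unfold Cminus. apply ccont_plus; auto. apply ccont_opp; auto. Qed.
Lemma ccont_mult f g : ccont f -> ccont g -> ccont (fun t => f t * g t)%C.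
Proof. intros Hf Hg t. destruct (Hf t), (Hg t). split; simpl.
  - apply (continuity_pt_minus (fun s => fst (f s) * fst (g s)) (fun s => snd (f s) * snd (g s))).
    exact (continuity_pt_mult (fun s => fst (f s)) (fun s => fst (g s)) t H H1).
    exact (continuity_pt_mult (fun s => snd (f s)) (fun s => snd (g s)) t H0 H2).
  - apply (continuity_pt_plus (fun s => fst (f s) * snd (g s)) (fun s => snd (f s) * fst (g s))).
    exact (continuity_pt_mult (fun s => fst (f s)) (fun s => snd (g s)) t H H2).
    exact (continuity_pt_mult (fun s => snd (f s)) (fun s => fst (g s)) t H0 H1). Qed.
Lemma ccont_inv f : ccont f -> (forall t, f t <> RC 0) -> ccont (fun t => / f t)%C.
Proof. intros Hf Hn t. destruct (Hf t).
  assert (Hd : fst (f t) ^ 2 + snd (f t) ^ 2 <> 0).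
  { intro Z. apply (Hn t). apply Cmod_eq_0. unfold Cmod. rewrite Z. apply sqrt_0. }
  assert (Cd : continuity_pt (fun s => fst (f s) ^ 2 + snd (f s) ^ 2) t).
  { apply (continuity_pt_plus (fun s => fst (f s) ^ 2) (fun s => snd (f s) ^ 2)).
    simpl. apply (continuity_pt_mult (fun s => fst (f s)) (fun s => fst (f s) * 1)); auto.
    apply (continuity_pt_mult (fun s => fst (f s)) (fun s => 1)); auto. apply continuity_pt_const; intros x y; reflexivity.
    simpl. apply (continuity_pt_mult (fun s => snd (f s)) (fun s => snd (f s) * 1)); auto.
    apply (continuity_pt_mult (fun s => snd (f s)) (fun s => 1)); auto. apply continuity_pt_const; intros x y; reflexivity. }
  split; simpl.
  - exact (continuity_pt_div (fun s => fst (f s)) (fun s => fst (f s) ^ 2 + snd (f s) ^ 2) t H Cd Hd).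
  - exact (continuity_pt_div (fun s => - snd (f s)) (fun s => fst (f s) ^ 2 + snd (f s) ^ 2) t
      (continuity_pt_opp (fun s => snd (f s)) t H0) Cd Hd).
Qed.
Lemma ccont_div f g : ccont f -> ccont g -> (forall t, g t <> RC 0) -> ccont (fun t => f t / g t)%C.
Proof. intros. unfold Cdiv. apply ccont_mult; auto. apply ccont_inv; auto. Qed.

Lemma expi_periodic : periodic expi.
Proof. intro t. unfold expi. rewrite cos_plus, sin_plus, cos_2PI, sin_2PI. f_equal; ring. Qed.

Lemma Cmod_expi t : Cmod (expi t) = 1.
Proof. unfold Cmod, expi; simpl. rewrite Rmult_1_r, Rmult_1_r.
  replace (cos t * cos t + sin t * sin t) with 1. apply sqrt_1.
  generalize (sin2_cos2 t). unfold Rsqr. lra. Qed.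

Lemma expi_sub_neq0 (z : CC) t : Cmod z < 1 -> (expi t - z)%C <> RC 0.
Proof. intros Hz Z. assert (expi t = z). { replace (expi t) with ((expi t - z) + z)%C by ring. rewrite Z. ring. }
  rewrite <- H, Cmod_expi in Hz. lra. Qed.
Lemma expi_sub_ge (z : CC) t : 1 - Cmod z <= Cmod (expi t - z)%C.
Proof. generalize (Cmod_triangle_minus (expi t) z). rewrite Cmod_expi. lra. Qed.

Lemma circle_fun_parts f : circle_cfun f -> circle_fun (fun t => fst (f t)) /\ circle_fun (fun t => snd (f t)).
Proof. intros [Hc Hp]. split; split; try (intro t; now rewrite Hp).
  intro t; apply (Hc t). intro t; apply (Hc t). Qed.
Lemma circle_fun_plus f g : circle_fun f -> circle_fun g -> circle_fun (fun t => f t + g t).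
Proof. intros [Cf Pf] [Cg Pg]. split. intro t. apply (continuity_pt_plus f g t (Cf t) (Cg t)).
  intro t. now rewrite Pf, Pg. Qed.
Lemma circle_fun_scal c f : circle_fun f -> circle_fun (fun t => c * f t).
Proof. intros [Cf Pf]. split. intro t. apply (continuity_pt_scal f c t (Cf t)).
  intro t. now rewrite Pf. Qed.
Lemma circle_fun_const c : circle_fun (fun _ => c).
Proof. split. intro t. apply continuity_pt_const; intros x y; reflexivity. intro t; reflexivity. Qed.
Lemma circle_fun_lin2 p f q g : circle_fun f -> circle_fun g -> circle_fun (fun t => p * f t + q * g t).
Proof. intros. apply (circle_fun_plus (fun t => p * f t) (fun t => q * g t)); apply circle_fun_scal; auto. Qed.

Lemma circle_cfun_plus f g : circle_cfun f -> circle_cfun g -> circle_cfun (fun t => f t + g t)%C.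
Proof. intros [] []. split. apply ccont_plus; auto. intro t. now rewrite H0, H2. Qed.
Lemma circle_cfun_cmult (c : CC) f : circle_cfun f -> circle_cfun (fun t => c * f t)%C.
Proof. intros []. split. apply ccont_mult; auto. apply ccont_const. intro t. now rewrite H0. Qed.

Lemma pos_fun_lin2 Lam p f q g : positive_functional Lam -> circle_fun f -> circle_fun g ->
  Lam (fun t => p * f t + q * g t) = p * Lam f + q * Lam g.
Proof. intros [Ha [Hs _]] Hf Hg.
  rewrite (Ha (fun t => p * f t) (fun t => q * g t)) by (apply circle_fun_scal; auto).
  rewrite Hs, Hs; auto. Qed.
Lemma pos_fun_plus Lam f g : positive_functional Lam -> circle_fun f -> circle_fun g ->
  Lam (fun t => f t + g t) = Lam f + Lam g.
Proof. intros [Ha _] Hf Hg. now apply Ha. Qed.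
Lemma pos_fun_scal Lam c f : positive_functional Lam -> circle_fun f ->
  Lam (fun t => c * f t) = c * Lam f.
Proof. intros [_ [Hs _]] Hf. now apply Hs. Qed.
Lemma pos_fun_const Lam c : positive_functional Lam -> Lam (fun _ => c) = c * Lam (fun _ => 1).
Proof. intros H. rewrite <- pos_fun_scal; auto. f_equal. apply functional_extensionality; intros; ring.
  apply circle_fun_const. Qed.
Lemma pos_fun_ge0 Lam f : positive_functional Lam -> circle_fun f -> (forall t, 0 <= f t) -> 0 <= Lam f.
Proof. intros [_ [_ Hp]]. auto. Qed.
Lemma pos_fun_one_ge0 Lam : positive_functional Lam -> 0 <= Lam (fun _ => 1).
Proof. intros H. apply pos_fun_ge0; auto. apply circle_fun_const. intros; lra. Qed.
Lemma pos_fun_mono Lam f g : positive_functional Lam -> circle_fun f -> circle_fun g ->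
  (forall t, f t <= g t) -> Lam f <= Lam g.
Proof. intros H Hf Hg Hle.
  assert (0 <= Lam (fun t => 1 * g t + (-1) * f t)).
  { apply pos_fun_ge0; auto. apply circle_fun_lin2; auto. intro t. specialize (Hle t). lra. }
  rewrite pos_fun_lin2 in H0; auto. lra. Qed.
Lemma pos_fun_bound Lam f M : positive_functional Lam -> circle_fun f ->
  (forall t, Rabs (f t) <= M) -> Rabs (Lam f) <= M * Lam (fun _ => 1).
Proof. intros H Hf B.
  assert (Lam f <= Lam (fun _ => M)) by (apply pos_fun_mono; auto; [apply circle_fun_const| intro t; specialize (B t); apply Rabs_le_between in B; lra]).
  assert (Lam (fun t => (-1) * (fun _ => M) t) <= Lam f).
  { apply pos_fun_mono; auto. apply circle_fun_scal, circle_fun_const. intro t; specialize (B t); apply Rabs_le_between in B; lra. }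
  rewrite pos_fun_scal in H1 by (auto; apply circle_fun_const). rewrite pos_fun_const in H0, H1 by auto.
  apply Rabs_le. lra. Qed.

Definition cLam (Lam : (R -> R) -> R) (f : R -> CC) : CC :=
  (Lam (fun t => fst (f t)), Lam (fun t => snd (f t))).

Lemma cLam_plus Lam f g : positive_functional Lam -> circle_cfun f -> circle_cfun g ->
  cLam Lam (fun t => f t + g t)%C = (cLam Lam f + cLam Lam g)%C.
Proof. intros H Hf Hg. apply circle_fun_parts in Hf as [F1 F2]. apply circle_fun_parts in Hg as [G1 G2].
  unfold cLam. simpl. rewrite !pos_fun_plus; auto. Qed.
Lemma cLam_cmult Lam (c : CC) f : positive_functional Lam -> circle_cfun f ->
  cLam Lam (fun t => c * f t)%C = (c * cLam Lam f)%C.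
Proof. intros H Hf. apply circle_fun_parts in Hf as [F1 F2]. unfold cLam.
  replace (fun t => fst (c * f t)%C) with (fun t => fst c * fst (f t) + (- snd c) * snd (f t))
    by (apply functional_extensionality; intros; simpl; ring).
  replace (fun t => snd (c * f t)%C) with (fun t => fst c * snd (f t) + snd c * fst (f t))
    by (apply functional_extensionality; intros; simpl; ring).
  rewrite !pos_fun_lin2 by auto. unfold Cmult; simpl. f_equal; ring. Qed.
Lemma cLam_bound Lam f M : positive_functional Lam -> circle_cfun f ->
  (forall t, Cmod (f t) <= M) -> Cmod (cLam Lam f) <= 2 * M * Lam (fun _ => 1).
Proof. intros H Hf B. apply circle_fun_parts in Hf as [F1 F2].
  eapply Rle_trans. apply Cmod_le_Rabs_sum. unfold cLam; simpl.
  assert (Rabs (Lam (fun t => fst (f t))) <= M * Lam (fun _ => 1)).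
  { apply pos_fun_bound; auto. intro t. eapply Rle_trans; [apply re_le_Cmod|apply B]. }
  assert (Rabs (Lam (fun t => snd (f t))) <= M * Lam (fun _ => 1)).
  { apply pos_fun_bound; auto. intro t. eapply Rle_trans; [apply im_le_Cmod|apply B]. }
  lra. Qed.

(** * The Herglotz representation *)

Definition hkernel (z : CC) (t : R) : CC := ((expi t + z) / (expi t - z))%C.
Definition hkernel_deriv (z : CC) (t : R) : CC := (RC 2 * expi t / ((expi t - z) * (expi t - z)))%C.

Lemma circle_cfun_kernel z : Cmod z < 1 -> circle_cfun (hkernel z).
Proof. intros Hz. split.
  - unfold hkernel. apply ccont_div. apply ccont_plus; [apply ccont_expi|apply ccont_const].
    apply ccont_minus; [apply ccont_expi|apply ccont_const]. intro t; now apply expi_sub_neq0.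
  - intro t. unfold hkernel. now rewrite expi_periodic. Qed.
Lemma circle_cfun_kernel_deriv z : Cmod z < 1 -> circle_cfun (hkernel_deriv z).
Proof. intros Hz. split.
  - unfold hkernel_deriv. apply ccont_div. apply ccont_mult; [apply ccont_const|apply ccont_expi].
    apply ccont_mult; apply ccont_minus; try apply ccont_expi; apply ccont_const.
    intro t; apply Cmult_neq0; now apply expi_sub_neq0.
  - intro t. unfold hkernel_deriv. now rewrite expi_periodic. Qed.

Lemma cLam_lin2 Lam (a b : CC) f g : positive_functional Lam -> circle_cfun f -> circle_cfun g ->
  cLam Lam (fun t => a * f t + b * g t)%C = (a * cLam Lam f + b * cLam Lam g)%C.
Proof. intros. rewrite (cLam_plus Lam (fun t => a * f t)%C (fun t => b * g t)%C); auto.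
  rewrite !cLam_cmult; auto. apply circle_cfun_cmult; auto. apply circle_cfun_cmult; auto. Qed.

Lemma hkernel_diff_quot_bound z h t : Cmod z < 1 -> h <> RC 0 -> Cmod h <= (1 - Cmod z) / 2 ->
  Cmod ((hkernel (z + h) t - hkernel z t) / h - hkernel_deriv z t)%C <= 4 * Cmod h / (1 - Cmod z) ^ 3.
Proof. intros Hz Hh Hs. set (d := 1 - Cmod z) in *.
  assert (Hd : 0 < d) by (unfold d; lra).
  assert (A1 : d <= Cmod (expi t - z)%C) by apply expi_sub_ge.
  assert (A2 : d / 2 <= Cmod (expi t - (z + h))%C).
  { replace (expi t - (z + h))%C with ((expi t - z) - h)%C by ring.
    generalize (Cmod_triangle_minus (expi t - z)%C h). lra. }
  assert (N1 : (expi t - z)%C <> RC 0) by (apply Cmod_gt0_neq0; lra).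
  assert (N2 : (expi t - (z + h))%C <> RC 0) by (apply Cmod_gt0_neq0; lra).
  assert (N2' : (expi t - z - h)%C <> RC 0) by (replace (expi t - z - h)%C with (expi t - (z + h))%C by ring; auto).
  replace ((hkernel (z + h) t - hkernel z t) / h - hkernel_deriv z t)%C with
    (RC 2 * expi t * h / ((expi t - (z + h)) * ((expi t - z) * (expi t - z))))%C.
  2:{ unfold hkernel, hkernel_deriv. field. repeat split; auto. }
  rewrite Cmod_div. rewrite !Cmod_mult, Cmod_expi, Cmod_R, Rabs_right by lra.
  2:{ repeat apply Cmult_neq0; auto. }
  assert (0 <= Cmod h) by apply Cmod_ge_0.
  apply Rle_trans with (2 * 1 * Cmod h / (d / 2 * (d * d))).
  - unfold Rdiv. apply Rmult_le_compat_l. lra. apply Rinv_le_contravar.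
    repeat apply Rmult_lt_0_compat; lra. apply Rmult_le_compat; try lra.
    apply Rmult_le_pos; lra. apply Rmult_le_compat; lra.
  - right. field. lra.
Qed.

Definition herglotz (Lam : (R -> R) -> R) (z : CC) : CC := cLam Lam (hkernel z).

Definition has_cderiv (D : CC -> CC) (z L : CC) : Prop :=
  forall eps, 0 < eps -> exists d, 0 < d /\ forall h, h <> RC 0 -> Cmod h < d -> Cmod (z + h) < 1 ->
     Cmod ((D (z + h) - D z) / h - L)%C < eps.

Lemma herglotz_has_cderiv Lam z : positive_functional Lam -> Cmod z < 1 -> has_cderiv (herglotz Lam) z (cLam Lam (hkernel_deriv z)).
Proof. intros HL Hz eps He. set (d := 1 - Cmod z). assert (Hd : 0 < d) by (unfold d; lra).
  set (L1 := Lam (fun _ => 1)). assert (0 <= L1) by (apply pos_fun_one_ge0; auto).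
  exists (Rmin (d/2) (eps * d^3 / (8 * (L1 + 1)))). split.
  { apply Rmin_pos. lra. apply Rdiv_lt_0_compat. apply Rmult_lt_0_compat; auto. apply pow_lt; auto. lra. }
  intros h Hh Hs Hzh.
  assert (Hs1 : Cmod h <= d/2) by (generalize (Rmin_l (d/2) (eps * d^3 / (8 * (L1 + 1)))); lra).
  assert (Hs2 : Cmod h < eps * d^3 / (8 * (L1 + 1))) by (generalize (Rmin_r (d/2) (eps * d^3 / (8 * (L1 + 1)))); lra).
  assert (Cmod (z + h) < 1) by auto.
  assert (C1 : circle_cfun (hkernel (z+h))) by (apply circle_cfun_kernel; auto).
  assert (C2 : circle_cfun (hkernel z)) by (apply circle_cfun_kernel; auto).
  assert (C3 : circle_cfun (hkernel_deriv z)) by (apply circle_cfun_kernel_deriv; auto).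
  assert (C4 : circle_cfun (fun t => RC 1 * hkernel (z+h) t + RC (-1) * hkernel z t)%C).
  { apply (circle_cfun_plus (fun t => RC 1 * hkernel (z+h) t)%C (fun t => RC (-1) * hkernel z t)%C); apply circle_cfun_cmult; auto. }
  assert (E : ((herglotz Lam (z + h) - herglotz Lam z) / h - cLam Lam (hkernel_deriv z))%C =
     cLam Lam (fun t => (/ h) * ((RC 1) * hkernel (z+h) t + (RC (-1)) * hkernel z t) + (RC (-1)) * hkernel_deriv z t)%C).
  { rewrite (cLam_lin2 Lam (/h)%C (RC (-1)) (fun t => (RC 1 * hkernel (z+h) t + RC (-1) * hkernel z t)%C)); auto.
    rewrite (cLam_lin2 Lam (RC 1) (RC (-1))); auto.
    unfold herglotz. field. auto. }
  rewrite E. eapply Rle_lt_trans. apply cLam_bound with (M := 4 * Cmod h / d ^ 3); auto.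
  - apply (circle_cfun_plus (fun t => / h * (RC 1 * hkernel (z + h) t + RC (-1) * hkernel z t))%C (fun t => RC (-1) * hkernel_deriv z t)%C);
    apply circle_cfun_cmult; auto.
  - intro t. replace (/ h * (RC 1 * hkernel (z + h) t + RC (-1) * hkernel z t) + RC (-1) * hkernel_deriv z t)%C
      with ((hkernel (z + h) t - hkernel z t) / h - hkernel_deriv z t)%C by (field; auto).
    apply hkernel_diff_quot_bound; auto.
  - assert (0 < d^3) by (apply pow_lt; auto).
    apply Rle_lt_trans with (2 * (4 * (eps * d ^ 3 / (8 * (L1 + 1))) / d ^ 3) * L1).
    + apply Rmult_le_compat_r; auto. apply Rmult_le_compat_l; [lra|].
      unfold Rdiv. apply Rmult_le_compat_r. left; apply Rinv_0_lt_compat; auto. lra.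
    + replace (2 * (4 * (eps * d ^ 3 / (8 * (L1 + 1))) / d ^ 3) * L1) with (eps * (L1 / (L1 + 1))) by (field; lra).
      assert (L1 / (L1 + 1) < 1) by (apply Rmult_lt_reg_r with (L1+1); [lra|]; unfold Rdiv; rewrite Rmult_assoc, Rinv_l; lra).
      nra.
Qed.

(* Increments [h] of size [r] at [z] staying in the disc, so that derivatives become [ulim]s. *)
Definition incr_at (z : CC) (r : R) (h : CC) : Prop := r = Cmod h /\ h <> RC 0 /\ Cmod (z + h) < 1.

Lemma has_cderiv_ulim D z L : has_cderiv D z L <-> ulim (incr_at z) (fun _ h => ((D (z + h) - D z) / h)%C) (fun _ => L).
Proof. split.
  - intros H eps He. destruct (H eps He) as [d [Hd K]]. exists d; split; auto.
    intros r h Hr [E [Hh Hz]]. subst r. apply K; auto. lra.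
  - intros H eps He. destruct (H eps He) as [d [Hd K]]. exists d; split; auto.
    intros h Hh Hs Hz. apply (K (Cmod h) h). split; auto. apply Cmod_gt_0; auto. split; auto.
Qed.

Lemma ulim_incr z : ulim (incr_at z) (fun _ h => h) (fun _ => RC 0).
Proof. intros eps He. exists eps; split; auto. intros r h Hr [E _].
  replace (h - RC 0)%C with h by ring. lra. Qed.

Lemma analytic_has_cderiv phi : analytic_on_disc phi -> forall z, Cmod z < 1 -> exists L, has_cderiv phi z L.
Proof. intros Hana z Hz. rewrite <- Cabs_Cmod in Hz. destruct (Hana z Hz) as [L HL]. exists L.
  intros eps He. destruct (HL eps He) as [d [Hd K]]. exists d; split; auto.
  intros h Hh Hs Hzh. rewrite <- Cabs_Cmod in Hs, Hzh. specialize (K h Hh Hs Hzh).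
  rewrite Cabs_Cmod, Cdiv_Complex in K. exact K. Qed.

Lemma has_cderiv_minus f g z L1 L2 : has_cderiv f z L1 -> has_cderiv g z L2 -> has_cderiv (fun w => f w - g w)%C z (L1 - L2)%C.
Proof. intros H1 H2. apply has_cderiv_ulim in H1. apply has_cderiv_ulim in H2. apply has_cderiv_ulim.
  eapply ulim_ext. 2: apply (ulim_minus _ _ _ _ _ H1 H2).
  intros r h Hr [E [Hh Hz]]. simpl. field. auto. Qed.

Definition cayley (phi : CC -> CC) (z : CC) : CC := ((RC 1 + phi z) / (RC 1 - phi z))%C.

Lemma one_sub_neq0 (w : CC) : Cmod w < 1 -> (RC 1 - w)%C <> RC 0.
Proof. intros H Z. assert (w = RC 1) by (replace w with (RC 1 - (RC 1 - w))%C by ring; rewrite Z; ring).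
  rewrite H0, Cmod_R, Rabs_R1 in H. lra. Qed.
Lemma one_sub_ge (w : CC) : 1 - Cmod w <= Cmod (RC 1 - w)%C.
Proof. generalize (Cmod_triangle_minus (RC 1) w). rewrite Cmod_R, Rabs_R1. lra. Qed.

Lemma cayley_has_cderiv phi z : maps_disc_to_disc phi -> Cmod z < 1 -> forall L, has_cderiv phi z L ->
  has_cderiv (cayley phi) z (RC 2 * L * / ((RC 1 - phi z) * (RC 1 - phi z)))%C.
Proof. intros Hs Hz L HL.
  assert (Hd := maps_disc_Cmod phi Hs).
  apply has_cderiv_ulim in HL. apply has_cderiv_ulim.
  set (q := fun (h : CC) => ((phi (z + h) - phi z) / h)%C).
  assert (U1 : ulim (incr_at z) (fun _ h => (RC 1 - (phi z + h * q h))%C) (fun _ => (RC 1 - (phi z + RC 0 * L))%C)).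
  { apply (ulim_minus (incr_at z) (fun _ _ => RC 1) (fun _ h => (phi z + h * q h)%C) (fun _ => RC 1) (fun _ => (phi z + RC 0 * L)%C)).
    apply (ulim_const (incr_at z) (fun _ => RC 1)).
    apply (ulim_plus (incr_at z) (fun _ _ => phi z) (fun _ h => (h * q h)%C) (fun _ => phi z) (fun _ => (RC 0 * L)%C)).
    apply (ulim_const (incr_at z) (fun _ => phi z)).
    apply (ulim_mult (incr_at z) (fun _ h => h) (fun _ h => q h) (fun _ => RC 0) (fun _ => L)).
    apply ubnd_const. apply ubnd_const. apply ulim_incr. exact HL. }
  set (c := 1 - Cmod (phi z)). assert (Hc : 0 < c) by (unfold c; generalize (Hd z Hz); lra).
  assert (B1 : forall (r : R) (h : CC), incr_at z r h -> c <= Cmod ((fun _ : CC => (RC 1 - (phi z + RC 0 * L))%C) h)).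
  { intros; simpl. replace (RC 1 - (phi z + RC 0 * L))%C with (RC 1 - phi z)%C by ring; apply one_sub_ge. }
  assert (U2 := ulim_inv _ _ _ c Hc B1 U1).
  set (k := (RC 2 * / (RC 1 - phi z))%C).
  assert (U3 := ulim_mult _ _ _ _ _ (ubnd_const _ (k * L)%C) (ubnd_const _ (/ (RC 1 - (phi z + RC 0 * L)))%C)
            (ulim_mult _ _ _ _ _ (ubnd_const _ k) (ubnd_const _ L) (ulim_const (incr_at z) (fun _ => k)) HL) U2).
  eapply ulim_ext_lim. 2: eapply ulim_ext. 3: exact U3.
  - intros r h _. cbv beta. unfold k. field. apply one_sub_neq0, Hd, Hz.
  - intros r h Hr [E [Hh Hzh]]. cbv beta. unfold cayley, q, k.
    assert (Ez : @eq CC (phi z + h * ((phi (z + h) - phi z) / h))%C (phi (z + h)%C)) by (field; auto). rewrite Ez.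
    field. repeat split; auto; apply one_sub_neq0, Hd; auto.
Qed.

Lemma Re_sum_div_sub (a b : CC) : (a - b)%C <> RC 0 ->
  fst ((a + b) / (a - b))%C = (fst a * fst a + snd a * snd a - fst b * fst b - snd b * snd b) /
     ((fst a - fst b) * (fst a - fst b) + (snd a - snd b) * (snd a - snd b)).
Proof. intros H. assert (Hn : (fst a - fst b) * (fst a - fst b) + (snd a - snd b) * (snd a - snd b) <> 0).
  { intro Z. apply H. apply Cmod_eq_0. unfold Cmod. replace (fst (a - b)%C ^ 2 + snd (a - b)%C ^ 2) with 0. apply sqrt_0. simpl. rewrite <- Z. ring. }
  destruct a as [p q], b as [x y]. unfold Complex.Cdiv, Complex.Cinv, Cmult, Cplus, Cminus, Cplus, Complex.Copp. simpl in *.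
  field. exact Hn. Qed.

Lemma Re_cayley_herglotz Lam phi z : is_clark_functional phi (Defs.RtoC 1) Lam -> maps_disc_to_disc phi -> Cmod z < 1 ->
  fst (cayley phi z) = fst (herglotz Lam z).
Proof. intros [HL Hc] Hs Hz.
  assert (Hpz := maps_disc_Cmod phi Hs z Hz).
  change (fst (cayley phi z) = Lam (fun t => fst (hkernel z t))).
  replace (fun t => fst (hkernel z t)) with (fun th => Poisson z (polar 1 th)).
  2:{ apply functional_extensionality; intro t. unfold hkernel. rewrite Re_sum_div_sub by (apply expi_sub_neq0; auto).
      unfold Poisson, Cnorm2, polar, expi, Csub, Cadd, Defs.Copp; simpl. generalize (sin2_cos2 t); unfold Rsqr; intro E.
      f_equal; [lra | ring]. }
  rewrite Hc by (now rewrite Cabs_Cmod). unfold cayley. rewrite Re_sum_div_sub by (apply one_sub_neq0; auto).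
  unfold Cnorm2, Csub, Cadd, Defs.Copp, Defs.RtoC; simpl. f_equal; ring.
Qed.

Lemma fst_div_real (x : CC) e : fst x = 0 -> e <> 0 -> fst (x / RC e)%C = 0.
Proof. destruct x as [a b]. simpl. intros -> He. unfold Complex.Cdiv, Complex.Cinv, Cmult. simpl. field. auto. Qed.
Lemma snd_div_imag (x : CC) e : fst x = 0 -> e <> 0 -> snd (x / (0, e))%C = 0.
Proof. destruct x as [a b]. simpl. intros -> He. unfold Complex.Cdiv, Complex.Cinv, Cmult. simpl. field. auto. Qed.

Lemma Rabs_lt_all_eq0 (x : R) : (forall eps, 0 < eps -> Rabs x < eps) -> x = 0.
Proof. intros H. destruct (Req_dec x 0); auto. exfalso. assert (0 < Rabs x) by (apply Rabs_pos_lt; auto).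
  specialize (H (Rabs x) H1). lra. Qed.

Lemma cderiv_eq0_of_Re_eq0 D z L : Cmod z < 1 -> has_cderiv D z L -> (forall w, Cmod w < 1 -> fst (D w) = 0) -> L = RC 0.
Proof. intros Hz HD H0.
  assert (Hgen : forall eps, 0 < eps -> exists e, 0 < e /\ e < 1 - Cmod z /\
       Cmod ((D (z + RC e) - D z) / RC e - L)%C < eps /\
       Cmod ((D (z + (0,e)) - D z) / (0,e) - L)%C < eps).
  { intros eps He. destruct (HD eps He) as [d [Hd K]].
    assert (Hm : 0 < Rmin d (1 - Cmod z)) by (apply Rmin_pos; lra).
    set (e := Rmin d (1 - Cmod z) / 2).
    assert (0 < e) by (unfold e; lra).
    assert (e < d) by (unfold e; generalize (Rmin_l d (1 - Cmod z)); lra).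
    assert (e < 1 - Cmod z) by (unfold e; generalize (Rmin_r d (1 - Cmod z)); lra).
    exists e; split; auto. split; auto. split; apply K.
    - intro Z. assert (Cmod (RC e) = 0) by (rewrite Z; apply Cmod_0). rewrite Cmod_real in H3; lra.
    - rewrite Cmod_real; lra.
    - eapply Rle_lt_trans. apply Cmod_triangle. rewrite Cmod_real; lra.
    - intro Z. assert (e = snd (0, e)) by reflexivity. rewrite Z in H3. simpl in H3. lra.
    - rewrite Cmod_imag; lra.
    - eapply Rle_lt_trans. apply Cmod_triangle. rewrite Cmod_imag; lra. }
  destruct L as [l1 l2]. unfold Complex.RtoC. f_equal.
  - apply Rabs_lt_all_eq0. intros eps He. destruct (Hgen eps He) as [e [He0 [He1 [K1 _]]]].
    assert (Cmod (z + RC e)%C < 1) by (eapply Rle_lt_trans; [apply Cmod_triangle|rewrite Cmod_real; lra]).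
    assert (F : fst ((D (z + RC e) - D z) / RC e)%C = 0).
    { apply fst_div_real. simpl. rewrite !H0; auto. ring. lra. }
    eapply Rle_lt_trans. 2: exact K1. eapply Rle_trans. 2: apply re_le_Cmod.
    change (Rabs l1 <= Rabs (fst ((D (z + RC e) - D z) / RC e)%C + - l1)). rewrite F, Rplus_0_l, Rabs_Ropp. lra.
  - apply Rabs_lt_all_eq0. intros eps He. destruct (Hgen eps He) as [e [He0 [He1 [_ K1]]]].
    assert (Cmod (z + (0,e))%C < 1) by (eapply Rle_lt_trans; [apply Cmod_triangle|rewrite Cmod_imag; lra]).
    assert (F : snd ((D (z + (0,e)) - D z) / (0,e))%C = 0).
    { apply snd_div_imag. simpl. rewrite !H0; auto. ring. lra. }
    eapply Rle_lt_trans. 2: exact K1. eapply Rle_trans. 2: apply im_le_Cmod.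
    change (Rabs l2 <= Rabs (snd ((D (z + (0,e)) - D z) / (0,e))%C + - l2)). rewrite F, Rplus_0_l, Rabs_Ropp. lra.
Qed.

Lemma Im_diff_le_of_diff_quot D w H e : H <> RC 0 -> Cmod ((D (w + H) - D w) / H)%C <= e ->
  Rabs (snd (D (w + H)%C) - snd (D w)) <= e * Cmod H.
Proof.
  intros HH K.
  replace (snd (D (w + H)%C) - snd (D w)) with (snd (((D (w + H) - D w) / H) * H)%C)
    by (replace (((D (w + H) - D w) / H) * H)%C with (D (w + H) - D w)%C by (field; auto); simpl; ring).
  eapply Rle_trans; [apply im_le_Cmod|]. rewrite Cmod_mult.
  apply Rmult_le_compat_r; [apply Cmod_ge_0|exact K].
Qed.

Lemma Im_ray_derivative D z0 x : has_cderiv D (RC x * z0)%C (RC 0) -> Rabs x * Cmod z0 < 1 ->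
  derivable_pt_lim (fun t => snd (D (RC t * z0)%C)) x 0.
Proof.
  intros HD Hx eps He.
  set (M := Cmod z0 + 1). assert (HM : 0 < M) by (unfold M; generalize (Cmod_ge_0 z0); lra).
  destruct (HD (eps / M)) as [d [Hd K]]; [apply Rdiv_lt_0_compat; lra|].
  set (d' := Rmin (d / M) ((1 - Rabs x * Cmod z0) / M)).
  assert (Hp : 0 < d') by (apply Rmin_pos; apply Rdiv_lt_0_compat; lra).
  exists (mkposreal _ Hp). intros h Hh Hs. simpl in Hs.
  assert (Hs1 : Rabs h * M < d).
  { generalize (Rmin_l (d / M) ((1 - Rabs x * Cmod z0) / M)). fold d'. intro.
    apply Rmult_lt_reg_r with (/ M); [apply Rinv_0_lt_compat; lra|]. rewrite Rmult_assoc, Rinv_r, Rmult_1_r; lra. }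
  assert (Hs2 : Rabs h * M < 1 - Rabs x * Cmod z0).
  { generalize (Rmin_r (d / M) ((1 - Rabs x * Cmod z0) / M)). fold d'. intro.
    apply Rmult_lt_reg_r with (/ M); [apply Rinv_0_lt_compat; lra|]. rewrite Rmult_assoc, Rinv_r, Rmult_1_r; lra. }
  assert (Hah : 0 < Rabs h) by (apply Rabs_pos_lt; auto).
  assert (HhM : Rabs h * Cmod z0 <= Rabs h * M) by (apply Rmult_le_compat_l; [apply Rabs_pos|unfold M; lra]).
  replace (RC (x + h) * z0)%C with (RC x * z0 + RC h * z0)%C by (unfold Complex.RtoC, Cmult, Cplus; simpl; f_equal; ring).
  set (w := (RC x * z0)%C) in *. set (H := (RC h * z0)%C).
  assert (HH : Cmod H = Rabs h * Cmod z0) by (unfold H; rewrite Cmod_mult, Cmod_R; auto).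
  rewrite Rminus_0_r.
  destruct (Ceq_dec H (RC 0)) as [Z|Z].
  { rewrite Z, Cplus_0_r, Rminus_diag. unfold Rdiv. rewrite Rmult_0_l, Rabs_R0. exact He. }
  assert (Hin : Cmod (w + H)%C < 1).
  { eapply Rle_lt_trans; [apply Cmod_triangle|]. unfold w. rewrite Cmod_mult, Cmod_R, HH. lra. }
  assert (K1 := K H Z ltac:(lra) Hin).
  replace (((D (w + H) - D w) / H) - RC 0)%C with ((D (w + H) - D w) / H)%C in K1 by ring.
  assert (B := Im_diff_le_of_diff_quot D w H (eps / M) Z (Rlt_le _ _ K1)).
  unfold Rdiv at 1. rewrite Rabs_mult, Rabs_inv by lra.
  apply Rle_lt_trans with (eps / M * Cmod H * / Rabs h); [apply Rmult_le_compat_r; [apply Rlt_le, Rinv_0_lt_compat|]; lra|].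
  rewrite HH. replace (eps / M * (Rabs h * Cmod z0) * / Rabs h) with (eps * (Cmod z0 / M)) by (field; lra).
  assert (Cmod z0 / M < 1) by (apply Rmult_lt_reg_r with M; [lra|]; unfold Rdiv; rewrite Rmult_assoc, Rinv_l by lra; unfold M; lra).
  nra.
Qed.

Lemma Im_const_of_cderiv0 D : (forall w, Cmod w < 1 -> has_cderiv D w (RC 0)) ->
  forall z0, Cmod z0 < 1 -> snd (D z0) = snd (D (RC 0)).
Proof. intros HD z0 Hz.
  set (g := fun t => snd (D (RC t * z0)%C)).
  assert (Hg : forall x, 0 <= x <= 1 -> derivable_pt_lim g x 0).
  { intros x Hx. apply Im_ray_derivative.
    { apply HD. rewrite Cmod_mult, Cmod_R, Rabs_right by lra. assert (0 <= Cmod z0) by apply Cmod_ge_0. nra. }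
    rewrite Rabs_right by lra.
    assert (0 <= Cmod z0) by apply Cmod_ge_0. nra. }
  assert (pr : forall x, 0 < x < 1 -> derivable_pt g x).
  { intros x Hx. exists 0. apply Hg. lra. }
  assert (C := null_derivative_loc g 0 1 pr).
  assert (E : constant_D_eq g (fun x => 0 <= x <= 1) (g 0)).
  { apply C. intros x Hx. apply derivable_continuous_pt. exists 0. apply Hg; auto.
    intros x P. apply derive_pt_eq_0. apply Hg. lra. }
  specialize (E 1 ltac:(lra)). unfold g in E.
  replace (RC 1 * z0)%C with z0 in E by ring. replace (RC 0 * z0)%C with (RC 0) in E by ring. exact E.
Qed.

Lemma cayley_herglotz_repr Lam phi : analytic_on_disc phi -> maps_disc_to_disc phi ->
  is_clark_functional phi (Defs.RtoC 1) Lam ->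
  exists c0, forall z, Cmod z < 1 -> cayley phi z = (herglotz Lam z + (0, c0))%C.
Proof. intros Ha Hs Hc. set (D := fun w => (cayley phi w - herglotz Lam w)%C).
  assert (HL := proj1 Hc).
  assert (Re0 : forall w, Cmod w < 1 -> fst (D w) = 0).
  { intros w Hw. unfold D. change (fst (cayley phi w) + - fst (herglotz Lam w) = 0). rewrite (Re_cayley_herglotz Lam phi w Hc Hs Hw). ring. }
  assert (HD : forall w, Cmod w < 1 -> has_cderiv D w (RC 0)).
  { intros w Hw. destruct (analytic_has_cderiv phi Ha w Hw) as [L HLw].
    assert (Dd := has_cderiv_minus _ _ _ _ _ (cayley_has_cderiv phi w Hs Hw L HLw) (herglotz_has_cderiv Lam w HL Hw)).
    assert (E := cderiv_eq0_of_Re_eq0 D w _ Hw Dd Re0). rewrite <- E. exact Dd. }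
  exists (snd (D (RC 0))). intros z Hz.
  assert (E1 := Im_const_of_cderiv0 D HD z Hz). assert (E2 := Re0 z Hz).
  assert (E3 : D z = (0, snd (D (RC 0)))). { destruct (D z) eqn:Q. simpl in *. subst. reflexivity. }
  unfold D in E3. apply (@eq_trans CC _ (herglotz Lam z + (cayley phi z - herglotz Lam z))%C). ring. f_equal. exact E3.
Qed.

(** * The atom of [tau] at [1] *)

Lemma point_mass_ge0 Lam m : positive_functional Lam -> point_mass_at_1 Lam m -> 0 <= m.
Proof. intros HL [_ H2]. apply H2. intros g Hg Hb _. apply pos_fun_ge0; auto. intro t; apply Hb. Qed.

Lemma circle_fun_clip (g : R -> R) : circle_fun g -> circle_fun (fun t => (g t + 1 - Rabs (g t - 1)) / 2).
Proof. intros [Cg Pg]. split.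
  - intro t. unfold Rdiv. apply (continuity_pt_mult (fun t => g t + 1 - Rabs (g t - 1)) (fun _ => / 2)).
    + apply (continuity_pt_minus (fun t => g t + 1) (fun t => Rabs (g t - 1))).
      apply (continuity_pt_plus g (fun _ => 1)); auto. apply continuity_pt_const; intros x y; reflexivity.
      apply (continuity_pt_comp (fun t => g t - 1) Rabs).
      apply (continuity_pt_minus g (fun _ => 1)); auto. apply continuity_pt_const; intros x y; reflexivity.
      apply Rcontinuity_abs.
    + apply continuity_pt_const; intros x y; reflexivity.
  - intro t. now rewrite Pg. Qed.

(* Clipping [g / g(0)] at height [1] gives an admissible test function for [point_mass_at_1]. *)
Lemma point_mass_le Lam m g : positive_functional Lam -> point_mass_at_1 Lam m -> circle_fun g ->
  (forall t, 0 <= g t) -> m * g 0 <= Lam g.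
Proof. intros HL [H1 H2] Hg Hpos. destruct (Req_dec (g 0) 0) as [Z|Z].
  - rewrite Z, Rmult_0_r. apply pos_fun_ge0; auto.
  - assert (P : 0 < g 0) by (generalize (Hpos 0); lra).
    set (u := fun t => / g 0 * g t).
    assert (Cu : circle_fun u) by (apply circle_fun_scal; auto).
    assert (Hh := circle_fun_clip u Cu).
    assert (m <= Lam (fun t => (u t + 1 - Rabs (u t - 1)) / 2)).
    { apply H1; auto.
      - intro t. assert (0 <= u t) by (unfold u; apply Rmult_le_pos; [left; apply Rinv_0_lt_compat; auto| auto]).
        split; unfold Rabs; destruct (Rcase_abs (u t - 1)); lra.
      - unfold u. rewrite Rinv_l by auto. replace (1 - 1) with 0 by ring. rewrite Rabs_R0. lra. }
    assert (Lam (fun t => (u t + 1 - Rabs (u t - 1)) / 2) <= Lam u).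
    { apply pos_fun_mono; auto. intro t. unfold Rabs; destruct (Rcase_abs (u t - 1)); lra. }
    assert (E : Lam u = / g 0 * Lam g) by (unfold u; apply pos_fun_scal; auto).
    clearbody u.
    apply Rmult_le_reg_l with (/ g 0). apply Rinv_0_lt_compat; auto.
    replace (/ g 0 * (m * g 0)) with m by (field; auto). lra.
Qed.

Lemma point_mass_cutoff Lam m : point_mass_at_1 Lam m -> forall eps, 0 < eps ->
  exists g, circle_fun g /\ (forall t, 0 <= g t <= 1) /\ g 0 = 1 /\ Lam g < m + eps.
Proof. intros [H1 H2] eps He. apply NNPP. intro N.
  assert (m + eps <= m).
  { apply H2. intros g Hg Hb H0. apply Rnot_lt_le. intro L. apply N. exists g; auto. }
  lra. Qed.

(* The functional of [tau - m delta_1], positive when [m = tau({1})]. *)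
Definition Lam_diffuse (Lam : (R -> R) -> R) (m : R) (f : R -> R) : R := Lam f - m * f 0.

Lemma Lam_diffuse_ge0 Lam m f : positive_functional Lam -> point_mass_at_1 Lam m -> circle_fun f ->
  (forall t, 0 <= f t) -> 0 <= Lam_diffuse Lam m f.
Proof. intros. unfold Lam_diffuse. generalize (point_mass_le Lam m f H H0 H1 H2). lra. Qed.

Lemma Lam_diffuse_lin2 Lam m p f q g : positive_functional Lam -> circle_fun f -> circle_fun g ->
  Lam_diffuse Lam m (fun t => p * f t + q * g t) = p * Lam_diffuse Lam m f + q * Lam_diffuse Lam m g.
Proof. intros HL Hf Hg. unfold Lam_diffuse. rewrite pos_fun_lin2 by auto. ring. Qed.

Lemma Lam_diffuse_abs_le Lam m f h : positive_functional Lam -> point_mass_at_1 Lam m ->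
  circle_fun f -> circle_fun h -> (forall t, Rabs (f t) <= h t) ->
  Rabs (Lam_diffuse Lam m f) <= Lam_diffuse Lam m h.
Proof.
  intros HL Hm Hf Hh Hfh.
  assert (P : forall c, c = 1 \/ c = -1 -> 0 <= Lam_diffuse Lam m (fun t => 1 * h t + c * f t)).
  { intros c Hc. apply Lam_diffuse_ge0; auto; [apply circle_fun_lin2; auto|].
    intro t. specialize (Hfh t). apply Rabs_le_between in Hfh. destruct Hc; subst c; lra. }
  assert (P1 := P 1 (or_introl eq_refl)). assert (P2 := P (-1) (or_intror eq_refl)).
  rewrite Lam_diffuse_lin2 in P1, P2 by auto. apply Rabs_le. lra.
Qed.

Lemma periodic_nat (f : R -> R) : (forall t, f (t + 2 * PI) = f t) -> forall n t, f (t + 2 * PI * INR n) = f t.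
Proof. intros H n. induction n; intro t. simpl. now rewrite Rmult_0_r, Rplus_0_r.
  rewrite S_INR. replace (t + 2 * PI * (INR n + 1)) with ((t + 2 * PI * INR n) + 2 * PI) by ring.
  rewrite H. auto. Qed.
Lemma periodic_Z (f : R -> R) : (forall t, f (t + 2 * PI) = f t) -> forall k t, f (t + 2 * PI * IZR k) = f t.
Proof. intros H k t. destruct (Z_le_gt_dec 0 k).
  - rewrite <- (Z2Nat.id k) by auto. rewrite <- INR_IZR_INZ. apply periodic_nat; auto.
  - replace k with (- Z.of_nat (Z.to_nat (- k)))%Z by (rewrite Z2Nat.id; lia).
    rewrite opp_IZR, <- INR_IZR_INZ.
    rewrite <- (periodic_nat f H (Z.to_nat (-k)) (t + 2 * PI * - INR (Z.to_nat (- k)))).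
    f_equal. ring. Qed.

Lemma reduce_angle t : exists k, -PI <= t - 2 * PI * IZR k <= PI.
Proof. destruct (archimed (t / (2 * PI) + / 2)) as [A1 A2]. exists (up (t / (2 * PI) + / 2) - 1)%Z.
  rewrite minus_IZR. set (n := IZR (up (t / (2 * PI) + / 2))) in *.
  assert (P := PI_RGT_0).
  assert (E : t = 2 * PI * (t / (2 * PI))) by (field; lra).
  split.
  - apply Rmult_le_reg_r with (/ (2 * PI)). apply Rinv_0_lt_compat; lra.
    replace ((t - 2 * PI * (n - 1)) * / (2 * PI)) with (t / (2 * PI) - n + 1) by (field; lra).
    replace (- PI * / (2 * PI)) with (- / 2) by (field; lra). lra.
  - apply Rmult_le_reg_r with (/ (2 * PI)). apply Rinv_0_lt_compat; lra.
    replace ((t - 2 * PI * (n - 1)) * / (2 * PI)) with (t / (2 * PI) - n + 1) by (field; lra).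
    replace (PI * / (2 * PI)) with (/ 2) by (field; lra). lra.
Qed.

Lemma Cmod_expi_sub1_sqr t : Cmod (expi t - RC 1)%C * Cmod (expi t - RC 1)%C = 2 - 2 * cos t.
Proof. rewrite <- Cnorm2_Cmod. unfold Cnorm2, expi; simpl. generalize (sin2_cos2 t); unfold Rsqr; intro. nra. Qed.

Lemma cutoff_gt_half_near1 g : circle_fun g -> g 0 = 1 -> exists eta, 0 < eta /\
  forall t, Cmod (expi t - RC 1)%C < eta -> 1/2 < g t.
Proof. intros [Cg Pg] H0. assert (C0 := Cg 0). unfold continuity_pt, continue_in, limit1_in, limit_in in C0.
  destruct (C0 (1/2)) as [al [Hal K]]. lra.
  assert (P := PI_RGT_0).
  set (b := Rmin al PI / 2).
  assert (Hb : 0 < b) by (unfold b; generalize (Rmin_pos al PI Hal P); lra).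
  assert (Hb2 : b < al) by (unfold b; generalize (Rmin_l al PI); lra).
  assert (Hb3 : b < PI) by (unfold b; generalize (Rmin_r al PI); lra).
  assert (Cb : cos b < 1) by (rewrite <- cos_0; apply cos_decreasing_1; lra).
  clearbody b.
  exists (sqrt (2 - 2 * cos b)). split. apply sqrt_lt_R0. lra.
  intros t Ht. destruct (reduce_angle t) as [k Hk]. set (t' := t - 2 * PI * IZR k) in *.
  assert (Et : t = t' + 2 * PI * IZR k) by (unfold t'; ring).
  assert (Eg : g t = g t') by (rewrite Et; apply periodic_Z; auto).
  clearbody t'.
  assert (Ec : cos t = cos t') by (rewrite Et; apply (periodic_Z cos); intro s; rewrite cos_plus, cos_2PI, sin_2PI; ring).
  rewrite Eg. destruct (Rlt_le_dec (Rabs t') b) as [L|L].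
  - destruct (Req_dec t' 0) as [Zt|Zt]. rewrite Zt, H0; lra.
    assert (Rabs (g t' - g 0) < 1/2).
    { apply K. split. unfold D_x, no_cond; split; auto.
      simpl. unfold R_dist. rewrite Rminus_0_r. lra. }
    rewrite H0 in H. apply Rabs_def2 in H. lra.
  - exfalso. assert (cos t' <= cos b).
    { destruct (Rle_dec 0 t').
      - rewrite Rabs_right in L by lra. destruct (Req_dec b t'). rewrite H; lra. left; apply cos_decreasing_1; lra.
      - rewrite Rabs_left in L by lra. rewrite <- (cos_neg t'). destruct (Req_dec b (- t')). rewrite H; lra.
        left; apply cos_decreasing_1; lra. }
    assert (Cmod (expi t - RC 1)%C * Cmod (expi t - RC 1)%C < 2 - 2 * cos b).
    { assert (0 <= Cmod (expi t - RC 1)%C) by apply Cmod_ge_0.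
      assert (sqrt (2 - 2 * cos b) * sqrt (2 - 2 * cos b) = 2 - 2 * cos b) by (apply sqrt_sqrt; lra).
      nra. }
    rewrite Cmod_expi_sub1_sqr, Ec in H1. lra.
Qed.

(* Where [g > 1/2] use [|hkernel z t| <= 2 / (1 - |z|)]; elsewhere [|e^{it} - z| >= eta / 2]. *)
Lemma hkernel_bound_near1 (z : CC) g eta t : Cmod z < 1 -> 0 < eta -> (forall t, 0 <= g t) ->
  (forall t, Cmod (expi t - RC 1)%C < eta -> 1/2 < g t) -> Cmod (RC 1 - z)%C <= eta / 2 ->
  (1 - Cmod z) * Cmod (hkernel z t) <= 4 * g t + 4 * (1 - Cmod z) / eta.
Proof. intros Hz He Hg Hn Hr. assert (Hd : 0 < 1 - Cmod z) by lra.
  assert (N := expi_sub_neq0 z t Hz).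
  assert (D1 : 1 - Cmod z <= Cmod (expi t - z)%C) by apply expi_sub_ge.
  assert (Hk : Cmod (hkernel z t) <= 2 / Cmod (expi t - z)%C).
  { unfold hkernel. rewrite Cmod_div by auto. unfold Rdiv. apply Rmult_le_compat_r.
    left; apply Rinv_0_lt_compat; lra. eapply Rle_trans. apply Cmod_triangle. rewrite Cmod_expi. lra. }
  assert (0 <= g t) by auto.
  destruct (Rlt_le_dec (Cmod (expi t - RC 1)%C) eta) as [L|L].
  - specialize (Hn t L).
    assert ((1 - Cmod z) * Cmod (hkernel z t) <= 2).
    { eapply Rle_trans. apply Rmult_le_compat_l. lra. exact Hk.
      unfold Rdiv. rewrite <- Rmult_assoc. rewrite (Rmult_comm (1 - Cmod z) 2), Rmult_assoc.
      apply Rle_trans with (2 * 1). apply Rmult_le_compat_l. lra.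
      apply Rmult_le_reg_r with (Cmod (expi t - z)%C). lra. rewrite Rmult_assoc, Rinv_l by lra. lra. lra. }
    assert (0 <= 4 * (1 - Cmod z) / eta) by (apply Rmult_le_pos; [lra|left; apply Rinv_0_lt_compat; lra]).
    lra.
  - assert (D2 : eta / 2 <= Cmod (expi t - z)%C).
    { replace (expi t - z)%C with ((expi t - RC 1) + (RC 1 - z))%C by ring.
      generalize (Cmod_triangle_minus (expi t - RC 1)%C (- (RC 1 - z))%C). rewrite Cmod_opp.
      replace ((expi t - RC 1) - - (RC 1 - z))%C with ((expi t - RC 1) + (RC 1 - z))%C by ring. lra. }
    assert ((1 - Cmod z) * Cmod (hkernel z t) <= 4 * (1 - Cmod z) / eta).
    { eapply Rle_trans. apply Rmult_le_compat_l. lra. exact Hk.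
      apply Rle_trans with ((1 - Cmod z) * (2 / (eta / 2))).
      apply Rmult_le_compat_l. lra. unfold Rdiv. apply Rmult_le_compat_l. lra.
      apply Rinv_le_contravar; lra. right. field. lra. }
    lra.
Qed.

(* [hkernel z 0 = (1 + z) / (1 - z)]: this is the Herglotz integral of [tau - m delta_1]. *)
Definition hdefect (Lam : (R -> R) -> R) (m : R) (z : CC) : CC := (herglotz Lam z - RC m * hkernel z 0)%C.

Lemma hdefect_parts Lam m z : hdefect Lam m z = (Lam_diffuse Lam m (fun t => fst (hkernel z t)), Lam_diffuse Lam m (fun t => snd (hkernel z t))).
Proof. unfold hdefect, herglotz, cLam, Lam_diffuse, Cminus, Cplus, Complex.Copp, Cmult, Complex.RtoC. simpl. f_equal; ring. Qed.

Definition vanishes_at_1_weighted (E : CC -> CC) : Prop :=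
  forall eps, 0 < eps -> exists rho, 0 < rho /\ forall z, Cmod z < 1 -> Cmod (RC 1 - z)%C < rho ->
    (1 - Cmod z) * Cmod (E z) <= eps.

Lemma hdefect_small Lam m : positive_functional Lam -> point_mass_at_1 Lam m ->
  vanishes_at_1_weighted (hdefect Lam m).
Proof.
  intros HL Hm eps He. assert (m0 := point_mass_ge0 Lam m HL Hm).
  destruct (point_mass_cutoff Lam m Hm (eps / 16)) as [g [Cg [Bg [G0 Lg]]]]; [lra|].
  assert (Hg0 : forall t, 0 <= g t) by (intro t; apply Bg).
  destruct (cutoff_gt_half_near1 g Cg G0) as [eta [Heta Hn]].
  set (L1 := Lam (fun _ => 1)). assert (HL1 : 0 <= L1) by (apply pos_fun_one_ge0; auto).
  set (rho2 := eps * eta / (16 * (L1 + 1))). assert (Hrho2 : 0 < rho2) by (apply Rdiv_lt_0_compat; nra).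
  exists (Rmin (eta / 2) rho2). split; [apply Rmin_pos; lra|]. intros z Hz Hrho.
  assert (Hr2 : Cmod (RC 1 - z)%C <= eta / 2) by (generalize (Rmin_l (eta / 2) rho2); lra).
  assert (Hr3 : Cmod (RC 1 - z)%C < rho2) by (generalize (Rmin_r (eta / 2) rho2); lra).
  set (d := 1 - Cmod z). assert (Hd0 : 0 < d) by (unfold d; lra).
  assert (Hdr : d <= Cmod (RC 1 - z)%C) by (unfold d; generalize (one_sub_ge z); lra).
  set (h := fun t => 4 / d * g t + 4 / eta * (fun _ => 1) t).
  assert (Ch : circle_fun h) by (apply circle_fun_lin2; auto; apply circle_fun_const).
  assert (Dom : forall t, Cmod (hkernel z t) <= h t).
  { intro t. assert (B := hkernel_bound_near1 z g eta t Hz Heta Hg0 Hn Hr2). fold d in B.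
    apply Rmult_le_reg_l with d; [lra|]. unfold h.
    replace (d * (4 / d * g t + 4 / eta * 1)) with (4 * g t + 4 * d / eta) by (field; lra). exact B. }
  assert (Lh : d * Lam_diffuse Lam m h <= eps / 2).
  { unfold h. rewrite Lam_diffuse_lin2 by (auto; apply circle_fun_const).
    assert (Pg : Lam_diffuse Lam m g < eps / 16) by (unfold Lam_diffuse; rewrite G0; lra).
    assert (Pg0 : 0 <= Lam_diffuse Lam m g) by (apply Lam_diffuse_ge0; auto).
    assert (P1 : Lam_diffuse Lam m (fun _ => 1) <= L1) by (unfold Lam_diffuse, L1; nra).
    assert (P10 : 0 <= Lam_diffuse Lam m (fun _ => 1)) by (apply Lam_diffuse_ge0; auto; [apply circle_fun_const|intros; lra]).
    assert (dL1 : d * L1 <= eps * eta / 16).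
    { apply Rle_trans with (rho2 * (L1 + 1)); [nra|]. unfold rho2. right. field. lra. }
    replace (d * (4 / d * Lam_diffuse Lam m g + 4 / eta * Lam_diffuse Lam m (fun _ => 1)))
      with (4 * Lam_diffuse Lam m g + 4 / eta * (d * Lam_diffuse Lam m (fun _ => 1))) by (field; lra).
    assert (4 / eta * (d * Lam_diffuse Lam m (fun _ => 1)) <= 4 / eta * (eps * eta / 16)).
    { apply Rmult_le_compat_l; [apply Rlt_le, Rdiv_lt_0_compat|]; nra. }
    replace (4 / eta * (eps * eta / 16)) with (eps / 4) in H by (field; lra). lra. }
  destruct (circle_fun_parts _ (circle_cfun_kernel z Hz)) as [Ck1 Ck2].
  assert (R1 := Lam_diffuse_abs_le Lam m _ h HL Hm Ck1 Ch (fun t => Rle_trans _ _ _ (re_le_Cmod _) (Dom t))).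
  assert (R2 := Lam_diffuse_abs_le Lam m _ h HL Hm Ck2 Ch (fun t => Rle_trans _ _ _ (im_le_Cmod _) (Dom t))).
  fold d. rewrite hdefect_parts.
  apply Rle_trans with (d * (2 * Lam_diffuse Lam m h)); [|lra].
  apply Rmult_le_compat_l; [lra|]. eapply Rle_trans; [apply Cmod_le_Rabs_sum|]. cbn [fst snd]. lra.
Qed.

(** * Rescaling at the boundary point [1] *)

Lemma cos_approx1 a : cos_approx a 1 = 1 - a * a / 2.
Proof. unfold cos_approx, cos_term. simpl. field. Qed.
Lemma cos_approx2 a : cos_approx a 2 = 1 - a * a / 2 + a * a * a * a / 24.
Proof. unfold cos_approx, cos_term. simpl. field. Qed.
Lemma sin_approx1 a : sin_approx a 1 = a - a * a * a / 6.
Proof. unfold sin_approx, sin_term. simpl. field. Qed.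
Lemma sin_approx2 a : sin_approx a 2 = a - a * a * a / 6 + a * a * a * a * a / 120.
Proof. unfold sin_approx, sin_term. simpl. field. Qed.

Lemma one_sub_cos_le_sqr x : Rabs x <= 1 -> Rabs (1 - cos x) <= x * x.
Proof. intros H. assert (P := PI2_1). apply Rabs_le_between in H.
  destruct (cos_bound x 0 ltac:(lra) ltac:(lra)) as [C1 C2].
  simpl in C1, C2. rewrite cos_approx1 in C1. rewrite cos_approx2 in C2.
  apply Rabs_le. assert (0 <= x * x) by nra. assert (x * x <= 1) by nra. assert (x*x*x*x <= x * x) by nra. split; nra. Qed.

Lemma sin_sub_id_le_sqr_pos x : 0 <= x <= 1 -> Rabs (sin x - x) <= x * x.
Proof. intros H. assert (P := PI2_1).
  destruct (sin_bound x 0 ltac:(lra) ltac:(lra)) as [C1 C2].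
  simpl in C1, C2. rewrite sin_approx1 in C1. rewrite sin_approx2 in C2.
  apply Rabs_le. assert (0 <= x * x) by nra. assert (x * x <= 1) by nra. assert (x*x*x <= x * x) by nra.
  assert (x*x*x*x*x <= x * x*x) by nra. assert (0 <= x*x*x) by nra. split; nra. Qed.

Lemma sin_sub_id_le_sqr x : Rabs x <= 1 -> Rabs (sin x - x) <= x * x.
Proof. intros H. destruct (Rle_dec 0 x).
  - apply sin_sub_id_le_sqr_pos. apply Rabs_le_between in H. lra.
  - assert (0 <= -x <= 1) by (apply Rabs_le_between in H; lra).
    generalize (sin_sub_id_le_sqr_pos (-x) H0). rewrite sin_neg.
    replace (- sin x - - x) with (- (sin x - x)) by ring. rewrite Rabs_Ropp. lra. Qed.

(* With [t = r s], [zr] and [wr] are the points [(1 - delta r) e^{it}] and [(1 - r) e^{i kappa r}];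
   [ur = (1 - zr) / r] and [vr = (1 - conj wr) / r] tend to [u0] and [(1, kappa)]. *)
Definition zr (dl r s : R) : CC := polar (1 - dl * r) (r * s).
Definition wr (k r : R) : CC := polar (1 - r) (k * r).
Definition ur (dl r s : R) : CC := ((RC 1 - zr dl r s) / RC r)%C.
Definition u0 (dl s : R) : CC := (dl, - s).
Definition vr (k r : R) : CC := ((RC 1 - Cconj (wr k r)) / RC r)%C.

Lemma ur_bound dl S r s : 0 <= dl -> 1 <= S -> 0 < r -> r * S <= 1 -> Rabs s <= S ->
  Cmod (ur dl r s - u0 dl s)%C <= (2 + 3 * dl) * (S * S) * r.
Proof. intros Hd HS Hr HrS Hs.
  assert (Hx : Rabs (r * s) <= 1).
  { rewrite Rabs_mult, Rabs_right by lra. apply Rle_trans with (r * S); auto. apply Rmult_le_compat_l; lra. }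
  assert (C1 := one_sub_cos_le_sqr (r * s) Hx). assert (S1 := sin_sub_id_le_sqr (r * s) Hx).
  assert (Hss : s * s <= S * S).
  { assert (s * s = Rabs s * Rabs s) by (rewrite <- Rabs_mult; rewrite Rabs_right; nra).
    rewrite H. assert (0 <= Rabs s) by apply Rabs_pos. nra. }
  assert (Hr1 : r <= 1) by nra.
  assert (Hq : r * s * (r * s) <= r * (S * S)).
  { replace (r * s * (r * s)) with (r * (r * (s * s))) by ring. apply Rmult_le_compat_l. lra.
    assert (0 <= s * s) by nra. nra. }
  assert (Hq2 : r * s * (r * s) <= r * (S * S) * r) by nra.
  unfold ur, zr, polar, u0. rewrite Cdiv_RC by lra. eapply Rle_trans. apply Cmod_le_Rabs_sum. simpl.
  replace ((1 + - ((1 - dl * r) * cos (r * s))) / r + - dl) with ((1 - cos (r * s)) / r - dl * (1 - cos (r * s))) by (field; lra).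
  replace ((0 + - ((1 - dl * r) * sin (r * s))) / r + - - s) with (- ((sin (r * s) - r * s) / r) + dl * sin (r * s)) by (field; lra).
  assert (A1 : Rabs ((1 - cos (r * s)) / r) <= r * (S * S)).
  { unfold Rdiv. rewrite Rabs_mult, Rabs_inv, (Rabs_right r) by lra.
    apply Rmult_le_reg_r with r. lra. rewrite Rmult_assoc, Rinv_l by lra.
    apply Rle_trans with (r * s * (r * s)). lra. lra. }
  assert (A2 : Rabs ((sin (r * s) - r * s) / r) <= r * (S * S)).
  { unfold Rdiv. rewrite Rabs_mult, Rabs_inv, (Rabs_right r) by lra.
    apply Rmult_le_reg_r with r. lra. rewrite Rmult_assoc, Rinv_l by lra.
    apply Rle_trans with (r * s * (r * s)). lra. lra. }
  assert (A3 : Rabs (dl * (1 - cos (r * s))) <= dl * (r * (S * S))).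
  { rewrite Rabs_mult, Rabs_right by lra. apply Rmult_le_compat_l; auto.
    apply Rle_trans with (r * s * (r * s)). lra. lra. }
  assert (A4 : Rabs (dl * sin (r * s)) <= dl * (2 * r * (S * S))).
  { rewrite Rabs_mult, Rabs_right by lra. apply Rmult_le_compat_l; auto.
    replace (sin (r * s)) with ((sin (r * s) - r * s) + r * s) by ring. eapply Rle_trans. apply Rabs_triang.
    rewrite Rabs_mult, (Rabs_right r) by lra.
    assert (r * Rabs s <= r * (S * S)) by (apply Rmult_le_compat_l; nra).
    lra. }
  assert (B1 := Rabs_triang ((1 - cos (r * s)) / r) (- (dl * (1 - cos (r * s))))).
  assert (B2 := Rabs_triang (- ((sin (r * s) - r * s) / r)) (dl * sin (r * s))).
  rewrite Rabs_Ropp in B1, B2.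
  replace ((1 - cos (r * s)) / r - dl * (1 - cos (r * s))) with ((1 - cos (r * s)) / r + - (dl * (1 - cos (r * s)))) by ring. lra.
Qed.

Definition in_window (A B : R) (r s : R) : Prop := A <= s <= B.

Lemma Rabs_le_window A B s : A <= s <= B -> Rabs s <= Rabs A + Rabs B + 1.
Proof. intros. unfold Rabs. repeat destruct Rcase_abs; lra. Qed.

Lemma ur_ulim dl A B : 0 <= dl -> ulim (in_window A B) (ur dl) (u0 dl).
Proof. intros Hd. set (S := Rabs A + Rabs B + 1).
  assert (HS : 1 <= S) by (unfold S; generalize (Rabs_pos A) (Rabs_pos B); lra).
  apply (ulim_from_bound _ _ _ ((2 + 3 * dl) * (S * S)) (/ S)). apply Rinv_0_lt_compat; lra.
  intros r s Hr Hp. apply ur_bound; auto. lra.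
  apply Rmult_le_reg_r with (/ S). apply Rinv_0_lt_compat; lra. rewrite Rmult_assoc, Rinv_r, Rmult_1_r by lra. lra.
  apply Rabs_le_window; auto. Qed.

Lemma conj_wr k r : Cconj (wr k r) = zr 1 r (- k).
Proof. unfold Cconj, wr, zr, polar. simpl. replace (r * - k) with (- (k * r)) by ring.
  rewrite cos_neg, sin_neg. f_equal; ring. Qed.

Lemma vr_ulim {X} (P : R -> X -> Prop) k : ulim P (fun r _ => vr k r) (fun _ => (1, k)).
Proof. set (S := Rabs k + 1). assert (HS : 1 <= S) by (unfold S; generalize (Rabs_pos k); lra).
  apply (ulim_from_bound _ _ _ ((2 + 3 * 1) * (S * S)) (/ S)). apply Rinv_0_lt_compat; lra.
  intros r x Hr Hp. unfold vr. rewrite conj_wr. replace (1, k) with (u0 1 (- k)) by (unfold u0; f_equal; ring).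
  apply ur_bound; auto. lra. lra.
  apply Rmult_le_reg_r with (/ S). apply Rinv_0_lt_compat; lra. rewrite Rmult_assoc, Rinv_r, Rmult_1_r by lra. lra.
  unfold S. rewrite Rabs_Ropp. lra. Qed.

Lemma conj_wr_ulim {X} (P : R -> X -> Prop) k : ulim P (fun r _ => Cconj (wr k r)) (fun _ => RC 1).
Proof. assert (U := ulim_minus P (fun _ _ => RC 1) (fun r _ => (RC r * vr k r)%C) (fun _ => RC 1) (fun _ => (RC 0 * (1, k))%C)
     (ulim_const P (fun _ => RC 1))
     (ulim_mult P (fun r _ => RC r) (fun r _ => vr k r) (fun _ => RC 0) (fun _ => (1,k))
        (ubnd_const _ _) (ubnd_const _ _) (ulim_id P) (vr_ulim P k))).
  eapply ulim_ext_lim. 2: eapply ulim_ext. 3: exact U.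
  - intros. simpl. ring.
  - intros r x Hr _. simpl. unfold vr. field. intro Z. assert (Cmod (RC r) = 0) by (rewrite Z; apply Cmod_0).
    rewrite Cmod_R, Rabs_right in H; lra.
Qed.

Lemma u0_ubnd dl A B : 0 <= dl -> ubnd (in_window A B) (u0 dl).
Proof. intros Hd. exists (dl + (Rabs A + Rabs B + 1)). intros r s Hp. unfold u0.
  eapply Rle_trans. apply Cmod_le_Rabs_sum. simpl. rewrite Rabs_Ropp, Rabs_right by lra.
  generalize (Rabs_le_window A B s Hp). lra. Qed.

Lemma Cmod_zr dl r s : 0 < dl -> 0 < r -> dl * r < 1 -> Cmod (zr dl r s) = 1 - dl * r.
Proof. intros. unfold zr. rewrite Cmod_polar, Rabs_right; lra. Qed.

Lemma one_sub_zr dl r s : r <> 0 -> (RC 1 - zr dl r s)%C = (RC r * ur dl r s)%C.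
Proof. intros. unfold ur. field. intro Z. apply H. assert (Cmod (RC r) = 0) by (rewrite Z; apply Cmod_0).
  rewrite Cmod_R in H0. destruct (Rcase_abs r); [rewrite Rabs_left in H0 | rewrite Rabs_right in H0]; lra. Qed.

Lemma r_hdefect_ulim Lam m dl A B : 0 < dl ->
  vanishes_at_1_weighted (hdefect Lam m) ->
  ulim (in_window A B) (fun r s => RC r * hdefect Lam m (zr dl r s))%C (fun _ => RC 0).
Proof. intros Hd HE eps He.
  destruct (HE (eps * dl / 2)) as [rho [Hrho K]]. apply Rdiv_lt_0_compat; [nra|lra].
  destruct (ur_ulim dl A B ltac:(lra) 1 ltac:(lra)) as [d1 [Hd1 K1]].
  set (Mu := dl + (Rabs A + Rabs B + 1) + 1).
  assert (HMu : 1 <= Mu) by (unfold Mu; generalize (Rabs_pos A) (Rabs_pos B); lra).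
  assert (Hbu : forall s, A <= s <= B -> Cmod (u0 dl s) <= Mu - 1).
  { intros s Hs. unfold u0, Mu. eapply Rle_trans. apply Cmod_le_Rabs_sum. simpl. rewrite Rabs_Ropp, Rabs_right by lra.
    generalize (Rabs_le_window A B s Hs). lra. }
  clearbody Mu.
  exists (Rmin d1 (Rmin (/ (2 * dl)) (rho / Mu))). split.
  { apply Rmin_pos; auto. apply Rmin_pos. apply Rinv_0_lt_compat; lra. apply Rdiv_lt_0_compat; lra. }
  intros r s Hr Hs.
  assert (R1 : r < d1) by (generalize (Rmin_l d1 (Rmin (/ (2 * dl)) (rho / Mu))); lra).
  assert (R2 : r < / (2 * dl)) by (generalize (Rmin_r d1 (Rmin (/ (2 * dl)) (rho / Mu))) (Rmin_l (/ (2 * dl)) (rho / Mu)); lra).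
  assert (R3 : r < rho / Mu) by (generalize (Rmin_r d1 (Rmin (/ (2 * dl)) (rho / Mu))) (Rmin_r (/ (2 * dl)) (rho / Mu)); lra).
  assert (Hdr : dl * r < 1 / 2).
  { apply Rmult_lt_reg_r with (/ dl). apply Rinv_0_lt_compat; lra.
    replace (dl * r * / dl) with r by (field; lra). replace (1 / 2 * / dl) with (/ (2 * dl)) by (field; lra). lra. }
  assert (Hz : Cmod (zr dl r s) = 1 - dl * r) by (apply Cmod_zr; lra).
  specialize (K1 r s (conj (proj1 Hr) R1) Hs).
  assert (Hu : Cmod (ur dl r s) <= Mu).
  { replace (ur dl r s) with ((ur dl r s - u0 dl s) + u0 dl s)%C by ring.
    eapply Rle_trans. apply Cmod_triangle. specialize (Hbu s Hs). lra. }
  assert (H1z : Cmod (RC 1 - zr dl r s)%C < rho).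
  { rewrite one_sub_zr by lra. rewrite Cmod_mult, Cmod_R, Rabs_right by lra.
    apply Rle_lt_trans with (r * Mu). apply Rmult_le_compat_l; lra.
    apply Rmult_lt_reg_r with (/ Mu). apply Rinv_0_lt_compat; lra.
    rewrite Rmult_assoc, Rinv_r, Rmult_1_r by lra. exact R3. }
  assert (0 < dl * r) by (apply Rmult_lt_0_compat; lra). specialize (K (zr dl r s) ltac:(lra) H1z). rewrite Hz in K.
  replace (RC r * hdefect Lam m (zr dl r s) - RC 0)%C with (RC r * hdefect Lam m (zr dl r s))%C by ring.
  rewrite Cmod_mult, Cmod_R, Rabs_right by lra.
  assert (dl * (r * Cmod (hdefect Lam m (zr dl r s))) <= dl * (eps / 2)).
  { lra. }
  assert (r * Cmod (hdefect Lam m (zr dl r s)) <= eps / 2) by (apply Rmult_le_reg_l with dl; lra). lra.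
Qed.

(* [(1 + F(z)) (1 - z) -> 2 m], as [F = m (1 + z) / (1 - z) + hdefect + i c0]. [Phi] equals
   [r / (1 - conj w phi(z))] ([Phi_eq]), written so that every factor has a limit as [r -> 0+]. *)
Definition Ncay (phi : CC -> CC) (dl r s : R) : CC := ((RC 1 + cayley phi (zr dl r s)) * (RC 1 - zr dl r s))%C.
Definition Phi (phi : CC -> CC) (dl k r s : R) : CC :=
  (Ncay phi dl r s * / (vr k r * Ncay phi dl r s + RC 2 * Cconj (wr k r) * ur dl r s))%C.
Definition Phi0 (m dl k s : R) : CC := (RC (2 * m) * / ((1, k) * RC (2 * m) + RC 2 * u0 dl s))%C.

Lemma expi_0 : expi 0 = RC 1.
Proof. unfold expi. rewrite cos_0, sin_0. reflexivity. Qed.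

Lemma Ncay_ulim phi Lam m c0 dl A B : 0 < dl ->
  (forall z, Cmod z < 1 -> cayley phi z = (herglotz Lam z + (0, c0))%C) ->
  vanishes_at_1_weighted (hdefect Lam m) ->
  ulim (in_window A B) (Ncay phi dl) (fun _ => RC (2 * m)).
Proof. intros Hd HF HE.
  set (c1 := (RC 1 - RC m + (0, c0))%C).
  assert (U := ulim_plus _ _ _ _ _
    (ulim_plus _ _ _ _ _ (ulim_const (in_window A B) (fun _ => RC (2 * m)))
       (ulim_mult _ (fun _ _ => c1) (fun r s => RC r * ur dl r s)%C (fun _ => c1) (fun s => RC 0 * u0 dl s)%C
          (ubnd_const _ _) (ubnd_mult _ _ _ (ubnd_const _ _) (u0_ubnd dl A B ltac:(lra)))
          (ulim_const _ (fun _ => c1))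
          (ulim_mult _ _ _ _ _ (ubnd_const _ (RC 0)) (u0_ubnd dl A B ltac:(lra)) (ulim_id _) (ur_ulim dl A B ltac:(lra)))))
    (ulim_mult _ (fun r s => RC r * hdefect Lam m (zr dl r s))%C (ur dl) (fun _ => RC 0) (u0 dl)
       (ubnd_const _ _) (u0_ubnd dl A B ltac:(lra)) (r_hdefect_ulim Lam m dl A B Hd HE) (ur_ulim dl A B ltac:(lra)))).
  eapply ulim_ext_lim. 2: eapply (ulim_ext_loc _ _ _ _ (/ dl)). 4: exact U.
  - intros r s _. simpl. ring.
  - apply Rinv_0_lt_compat. lra.
  - intros r s Hr Hp. simpl.
    assert (Hdr : dl * r < 1).
    { apply Rmult_lt_reg_r with (/ dl). apply Rinv_0_lt_compat; lra.
      replace (dl * r * / dl) with r by (field; lra). lra. }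
    assert (0 < dl * r) by (apply Rmult_lt_0_compat; lra).
    assert (Hz : Cmod (zr dl r s) < 1) by (rewrite Cmod_zr; lra).
    assert (Hn := one_sub_neq0 _ Hz).
    replace (RC r * hdefect Lam m (zr dl r s) * ur dl r s)%C with (hdefect Lam m (zr dl r s) * (RC r * ur dl r s))%C by ring.
    rewrite <- one_sub_zr by lra. unfold Ncay. rewrite HF by auto.
    replace (herglotz Lam (zr dl r s)) with (hdefect Lam m (zr dl r s) + RC m * hkernel (zr dl r s) 0)%C by (unfold hdefect; ring).
    unfold hkernel, c1. rewrite expi_0, RC_mult. field. auto.
Qed.

Lemma Phi0_den_ge m dl k s : 0 <= m -> 0 < dl ->
  2 * dl <= Cmod ((1, k) * RC (2 * m) + RC 2 * u0 dl s)%C.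
Proof. intros. eapply Rle_trans. 2: apply re_le_Cmod. unfold u0, Complex.RtoC, Cmult, Cplus; simpl.
  rewrite Rabs_right; lra. Qed.

Lemma Phi_ulim phi Lam m c0 dl k A B : 0 <= m -> 0 < dl ->
  (forall z, Cmod z < 1 -> cayley phi z = (herglotz Lam z + (0, c0))%C) ->
  vanishes_at_1_weighted (hdefect Lam m) ->
  ulim (in_window A B) (Phi phi dl k) (Phi0 m dl k).
Proof. intros Hm Hd HF HE.
  assert (UN := Ncay_ulim phi Lam m c0 dl A B Hd HF HE).
  assert (UD := ulim_plus _ _ _ _ _
     (ulim_mult _ _ _ _ _ (ubnd_const _ (1, k)) (ubnd_const _ (RC (2 * m))) (vr_ulim _ k) UN)
     (ulim_mult _ (fun r s => RC 2 * Cconj (wr k r))%C (ur dl) (fun _ => RC 2 * RC 1)%C (u0 dl)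
        (ubnd_const _ _) (u0_ubnd dl A B ltac:(lra))
        (ulim_mult _ _ _ _ _ (ubnd_const _ (RC 2)) (ubnd_const _ (RC 1)) (ulim_const _ (fun _ => RC 2)) (conj_wr_ulim _ k))
        (ur_ulim dl A B ltac:(lra)))).
  assert (UD' : ulim (in_window A B) (fun r s => vr k r * Ncay phi dl r s + RC 2 * Cconj (wr k r) * ur dl r s)%C
                  (fun s => (1, k) * RC (2 * m) + RC 2 * u0 dl s)%C).
  { eapply ulim_ext_lim. 2: eapply ulim_ext. 3: exact UD. intros; simpl; ring. intros; simpl; ring. }
  assert (Hdl : 0 < 2 * dl) by lra.
  assert (UI := ulim_inv _ _ _ (2 * dl) Hdl (fun r s _ => Phi0_den_ge m dl k s Hm Hd) UD').
  assert (BI : ubnd (in_window A B) (fun s => / ((1, k) * RC (2 * m) + RC 2 * u0 dl s))%C).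
  { exists (/ (2 * dl)). intros r s _. assert (Hb := Phi0_den_ge m dl k s Hm Hd).
    rewrite Cmod_inv. apply Rinv_le_contravar; lra. apply Cmod_gt0_neq0. lra. }
  assert (UP := ulim_mult _ _ _ _ _ (ubnd_const _ (RC (2 * m))) BI UN UI).
  eapply ulim_ext_lim. 2: eapply ulim_ext. 3: exact UP.
  - intros. reflexivity.
  - intros. reflexivity.
Qed.

Lemma Cmod_conj_wr k r : 0 < r < 1 -> Cmod (Cconj (wr k r)) = 1 - r.
Proof.
  intros Hr. change (Cmod (Complex.Cconj (wr k r)) = 1 - r).
  rewrite Cmod_conj. unfold wr. rewrite Cmod_polar, Rabs_right; lra.
Qed.

Lemma one_sub_conj_wr_phi_neq0 phi k r z : maps_disc_to_disc phi -> 0 < r < 1 -> Cmod z < 1 ->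
  (RC 1 - Cconj (wr k r) * phi z)%C <> RC 0.
Proof.
  intros Hs Hr Hz. apply one_sub_neq0. rewrite Cmod_mult, Cmod_conj_wr by exact Hr.
  assert (Hp := maps_disc_Cmod phi Hs z Hz). assert (0 <= Cmod (phi z)) by apply Cmod_ge_0. nra.
Qed.

Lemma I_integrand_eq phi dl k r t : maps_disc_to_disc phi -> 0 < r < 1 -> 0 < dl * r < 1 ->
  I_integrand phi dl k r t = r * (2 - r) / Cnorm2 (RC 1 - Cconj (wr k r) * phi (polar (1 - dl * r) t))%C.
Proof.
  intros Hs Hr Hdr.
  assert (Hz : Cmod (polar (1 - dl * r) t) < 1) by (rewrite Cmod_polar, Rabs_right; lra).
  assert (N := one_sub_conj_wr_phi_neq0 phi k r _ Hs Hr Hz).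
  assert (Hq : Cnorm2 (wr k r) = (1 - r) * (1 - r)) by (rewrite Cnorm2_Cmod; unfold wr; rewrite Cmod_polar, Rabs_right; lra).
  unfold I_integrand, kernel. fold (wr k r). rewrite Hq, Cdiv_Complex, !Cnorm2_Cmod.
  change (Csub (Defs.RtoC 1) (Cmul (Cconj (wr k r)) (phi (polar (1 - dl * r) t))))
    with (RC 1 - Cconj (wr k r) * phi (polar (1 - dl * r) t))%C.
  change (Defs.RtoC (sqrt (1 - (1 - r) * (1 - r)))) with (RC (sqrt (1 - (1 - r) * (1 - r)))).
  unfold Complex.Cdiv. rewrite Cmod_mult, Cmod_inv, Cmod_R by exact N.
  assert (Sq : Rabs (sqrt (1 - (1 - r) * (1 - r))) * Rabs (sqrt (1 - (1 - r) * (1 - r))) = r * (2 - r)).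
  { rewrite <- Rabs_mult, sqrt_sqrt by nra. rewrite Rabs_right; [ring|nra]. }
  assert (HX : 0 < Cmod (RC 1 - Cconj (wr k r) * phi (polar (1 - dl * r) t))%C) by (apply Cmod_gt_0; exact N).
  revert Sq HX. generalize (Rabs (sqrt (1 - (1 - r) * (1 - r)))).
  generalize (Cmod (RC 1 - Cconj (wr k r) * phi (polar (1 - dl * r) t))%C).
  intros X Y Sq HX. rewrite <- Sq. field. lra.
Qed.

Lemma Phi_eq phi dl k r s : maps_disc_to_disc phi -> 0 < dl -> 0 < r < 1 -> dl * r < 1 ->
  Phi phi dl k r s = (RC r * / (RC 1 - Cconj (wr k r) * phi (zr dl r s)))%C.
Proof.
  intros Hs Hd Hr Hdr.
  assert (Hz : Cmod (zr dl r s) < 1) by (rewrite Cmod_zr; nra).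
  assert (N1 := one_sub_neq0 _ Hz). assert (N2 := one_sub_neq0 _ (maps_disc_Cmod phi Hs _ Hz)).
  assert (N3 := one_sub_conj_wr_phi_neq0 phi k r _ Hs Hr Hz).
  assert (N4 : RC r <> RC 0) by (apply RC_neq0; lra).
  set (z := zr dl r s) in *. set (p := phi z) in *. set (wb := Cconj (wr k r)) in *.
  assert (EN : Ncay phi dl r s = (RC 2 * (RC 1 - z) * / (RC 1 - p))%C).
  { unfold Ncay, cayley. fold z p. field. auto. }
  assert (NN : Ncay phi dl r s <> RC 0).
  { rewrite EN. apply Cmult_neq0. apply Cmult_neq0; auto. apply RC_neq0; lra. apply Cinv_neq0; auto. }
  assert (ED : (vr k r * Ncay phi dl r s + RC 2 * wb * ur dl r s)%C = (Ncay phi dl r s * (RC 1 - wb * p) * / RC r)%C).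
  { rewrite EN. unfold vr, ur. fold z wb. field. split; auto. }
  unfold Phi. fold wb. rewrite ED. field. repeat split; auto.
Qed.

Lemma r_integrand_eq phi dl k r s : maps_disc_to_disc phi -> 0 < dl -> 0 < r < 1 -> dl * r < 1 ->
  r * I_integrand phi dl k r (r * s) = (2 - r) * (Cmod (Phi phi dl k r s) * Cmod (Phi phi dl k r s)).
Proof.
  intros Hs Hd Hr Hdr.
  assert (Hz : Cmod (zr dl r s) < 1) by (rewrite Cmod_zr; nra).
  assert (N := one_sub_conj_wr_phi_neq0 phi k r _ Hs Hr Hz).
  rewrite I_integrand_eq, Phi_eq by (auto; nra).
  change (polar (1 - dl * r) (r * s)) with (zr dl r s).
  rewrite Cnorm2_Cmod, Cmod_mult, Cmod_inv, Cmod_R, Rabs_right by (auto; lra).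
  assert (0 < Cmod (RC 1 - Cconj (wr k r) * phi (zr dl r s))%C) by (apply Cmod_gt_0; exact N).
  field. lra.
Qed.

Definition lorentz (m dl k s : R) : R := 2 * m * m / ((m + dl) * (m + dl) + (m * k - s) * (m * k - s)).

Lemma RC_sq (x : CC) : (x * Complex.Cconj x)%C = RC (Cmod x * Cmod x).
Proof. rewrite <- Cmod2_conj. unfold Complex.RtoC. simpl. f_equal. f_equal. ring. Qed.

Lemma Phi0_Cmod_sqr m dl k s : 0 <= m -> 0 < dl -> 2 * (Cmod (Phi0 m dl k s) * Cmod (Phi0 m dl k s)) = lorentz m dl k s.
Proof. intros Hm Hd. unfold Phi0, lorentz.
  assert (0 < (m + dl) * (m + dl)) by (apply Rmult_lt_0_compat; lra). assert (0 <= (m * k - s) * (m * k - s)) by (apply Rle_0_sqr).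
  assert (Hpos : (m + dl) * (m + dl) + (m * k - s) * (m * k - s) <> 0) by (apply Rgt_not_eq; lra).
  assert (Hb := Phi0_den_ge m dl k s Hm Hd).
  rewrite Cmod_mult, Cmod_inv by (apply Cmod_gt0_neq0; lra).
  set (den := ((1, k) * RC (2 * m) + RC 2 * u0 dl s)%C) in *.
  assert (E : Cmod den * Cmod den = 4 * ((m + dl) * (m + dl) + (m * k - s) * (m * k - s))).
  { rewrite <- Cnorm2_Cmod. unfold den, Cnorm2, u0, Cmult, Cplus, Complex.RtoC. simpl. ring. }
  clearbody den. rewrite Cmod_R, Rabs_right by lra.
  replace (2 * (2 * m * / Cmod den * (2 * m * / Cmod den))) with (8 * m * m / (Cmod den * Cmod den)) by (field; lra).
  rewrite E. field. auto.
Qed.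

Lemma r_integrand_ulim phi Lam m c0 dl k A B : maps_disc_to_disc phi -> 0 <= m -> 0 < dl ->
  (forall z, Cmod z < 1 -> cayley phi z = (herglotz Lam z + (0, c0))%C) ->
  vanishes_at_1_weighted (hdefect Lam m) ->
  forall eps, 0 < eps -> exists d, 0 < d /\ forall r s, 0 < r < d -> A <= s <= B ->
    Rabs (r * I_integrand phi dl k r (r * s) - lorentz m dl k s) < eps.
Proof. intros Hs Hm Hd HF HE.
  assert (UP := Phi_ulim phi Lam m c0 dl k A B Hm Hd HF HE).
  assert (BP : ubnd (in_window A B) (Phi0 m dl k)).
  { exists (2 * m * / (2 * dl)). intros r s _. unfold Phi0. assert (Hb := Phi0_den_ge m dl k s Hm Hd).
    rewrite Cmod_mult, Cmod_inv by (apply Cmod_gt0_neq0; lra). rewrite Cmod_R, Rabs_right by lra.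
    apply Rmult_le_compat_l. lra. apply Rinv_le_contravar; lra. }
  assert (BPc : ubnd (in_window A B) (fun s => Complex.Cconj (Phi0 m dl k s))).
  { destruct BP as [M HM]. exists M. intros. rewrite Cmod_conj. eauto. }
  assert (U2 := ulim_mult _ _ _ _ _ BP BPc UP (ulim_conj _ _ _ UP)).
  assert (U3 := ulim_mult _ _ _ _ _ (ubnd_const _ (RC 2 - RC 0)%C) (ubnd_mult _ _ _ BP BPc)
     (ulim_minus _ _ _ _ _ (ulim_const _ (fun _ => RC 2)) (ulim_id (in_window A B))) U2).
  assert (U4 : ulim (in_window A B) (fun r s => RC (r * I_integrand phi dl k r (r * s))) (fun s => RC (lorentz m dl k s))).
  { eapply ulim_ext_lim. 2: eapply (ulim_ext_loc _ _ _ _ (Rmin 1 (/ dl))). 4: exact U3.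
    - intros r s _. simpl. rewrite RC_sq. rewrite <- Phi0_Cmod_sqr by auto.
      unfold Complex.RtoC, Cminus, Cplus, Complex.Copp, Cmult. simpl. f_equal; ring.
    - apply Rmin_pos. lra. apply Rinv_0_lt_compat; lra.
    - intros r s Hr _. simpl. assert (r < 1) by (generalize (Rmin_l 1 (/ dl)); lra).
      assert (r < / dl) by (generalize (Rmin_r 1 (/ dl)); lra).
      assert (dl * r < 1).
      { apply Rmult_lt_reg_r with (/ dl). apply Rinv_0_lt_compat; lra.
        replace (dl * r * / dl) with r by (field; lra). lra. }
      rewrite r_integrand_eq by (auto; lra). rewrite RC_sq.
      unfold Complex.RtoC, Cminus, Cplus, Complex.Copp, Cmult. simpl. f_equal; ring. }
  intros eps He. destruct (U4 eps He) as [d [Hd0 K]]. exists d; split; auto. intros r s Hr Hp.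
  specialize (K r s Hr Hp). replace (RC (r * I_integrand phi dl k r (r * s)) - RC (lorentz m dl k s))%C
    with (RC (r * I_integrand phi dl k r (r * s) - lorentz m dl k s)) in K.
  rewrite Cmod_R in K. auto.
  unfold Complex.RtoC, Cminus, Cplus, Complex.Copp. simpl. f_equal; ring.
Qed.

(** * The integral *)

Lemma analytic_continuous phi : analytic_on_disc phi -> forall z, Cmod z < 1 -> forall eps, 0 < eps ->
  exists d, 0 < d /\ forall w, Cmod w < 1 -> Cmod (w - z)%C < d -> Cmod (phi w - phi z)%C < eps.
Proof. intros Ha z Hz eps He. destruct (analytic_has_cderiv phi Ha z Hz) as [L HL].
  destruct (HL 1 ltac:(lra)) as [d [Hd K]].
  assert (HL0 : 0 < Cmod L + 1) by (generalize (Cmod_ge_0 L); lra).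
  exists (Rmin d (eps / (Cmod L + 1))). split. apply Rmin_pos; auto. apply Rdiv_lt_0_compat; lra.
  intros w Hw Hwz. assert (H1 : Cmod (w - z)%C < d) by (generalize (Rmin_l d (eps / (Cmod L + 1))); lra).
  assert (H2 : Cmod (w - z)%C < eps / (Cmod L + 1)) by (generalize (Rmin_r d (eps / (Cmod L + 1))); lra).
  destruct (Ceq_dec (w - z)%C (RC 0)) as [Z|Z].
  - assert (w = z) by (replace w with ((w - z) + z)%C by ring; rewrite Z; ring). subst w.
    replace (phi z - phi z)%C with (RC 0) by ring. rewrite Cmod_0. lra.
  - assert (Ew : w = (z + (w - z))%C) by ring.
    specialize (K (w - z)%C Z H1 ltac:(rewrite <- Ew; auto)). rewrite <- Ew in K.
    set (h := (w - z)%C) in *. set (Q := ((phi w - phi z) / h)%C) in *.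
    assert (EQ : (phi w - phi z)%C = (Q * h)%C) by (unfold Q; field; auto).
    rewrite EQ, Cmod_mult.
    assert (HQ : Cmod Q <= Cmod L + 1).
    { replace Q with ((Q - L) + L)%C by ring. eapply Rle_trans. apply Cmod_triangle. lra. }
    assert (0 <= Cmod h) by apply Cmod_ge_0. assert (0 <= Cmod Q) by apply Cmod_ge_0.
    apply Rle_lt_trans with ((Cmod L + 1) * Cmod h). apply Rmult_le_compat_r; lra.
    apply Rmult_lt_reg_r with (/ (Cmod L + 1)). apply Rinv_0_lt_compat; lra.
    replace ((Cmod L + 1) * Cmod h * / (Cmod L + 1)) with (Cmod h) by (field; lra). exact H2.
Qed.

Lemma ccont_comp_polar phi rho : analytic_on_disc phi -> 0 <= rho < 1 -> ccont (fun t => phi (polar rho t)).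
Proof. intros Ha Hr t0.
  assert (Hz : Cmod (polar rho t0) < 1) by (rewrite Cmod_polar, Rabs_right; lra).
  assert (Key : forall eps, 0 < eps -> exists al, 0 < al /\ forall t, Rabs (t - t0) < al ->
            Cmod (phi (polar rho t) - phi (polar rho t0))%C < eps).
  { intros eps He. destruct (analytic_continuous phi Ha _ Hz eps He) as [d [Hd K]].
    assert (Cc := continuity_cos t0). assert (Cs := continuity_sin t0).
    unfold continuity_pt, continue_in, limit1_in, limit_in in Cc, Cs. simpl in Cc, Cs. unfold R_dist in Cc, Cs.
    destruct (Cc (d / 2) ltac:(lra)) as [a1 [Ha1 K1]]. destruct (Cs (d / 2) ltac:(lra)) as [a2 [Ha2 K2]].
    exists (Rmin a1 a2). split. apply Rmin_pos; lra. intros t Ht.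
    destruct (Req_dec t t0) as [E|E].
    - subst t. replace (phi (polar rho t0) - phi (polar rho t0))%C with (RC 0) by ring. rewrite Cmod_0. lra.
    - apply K. rewrite Cmod_polar, Rabs_right; lra.
      assert (A1 : Rabs (cos t - cos t0) < d / 2).
      { apply K1. split. unfold D_x, no_cond. split; auto. generalize (Rmin_l a1 a2); lra. }
      assert (A2 : Rabs (sin t - sin t0) < d / 2).
      { apply K2. split. unfold D_x, no_cond. split; auto. generalize (Rmin_r a1 a2); lra. }
      eapply Rle_lt_trans. apply Cmod_le_Rabs_sum. unfold polar. simpl.
      replace (rho * cos t + - (rho * cos t0)) with (rho * (cos t - cos t0)) by ring.
      replace (rho * sin t + - (rho * sin t0)) with (rho * (sin t - sin t0)) by ring.
      rewrite !Rabs_mult, Rabs_right by lra.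
      assert (rho * Rabs (cos t - cos t0) <= Rabs (cos t - cos t0)) by (generalize (Rabs_pos (cos t - cos t0)); nra).
      assert (rho * Rabs (sin t - sin t0) <= Rabs (sin t - sin t0)) by (generalize (Rabs_pos (sin t - sin t0)); nra).
      lra. }
  split.
  - intros eps He. destruct (Key eps He) as [al [Hal K]]. exists al. split. lra.
    intros t [_ Ht]. simpl. unfold R_dist. simpl in Ht. unfold R_dist in Ht.
    eapply Rle_lt_trans. 2: apply (K t Ht). apply (re_le_Cmod (phi (polar rho t) - phi (polar rho t0))%C).
  - intros eps He. destruct (Key eps He) as [al [Hal K]]. exists al. split. lra.
    intros t [_ Ht]. simpl. unfold R_dist. simpl in Ht. unfold R_dist in Ht.
    eapply Rle_lt_trans. 2: apply (K t Ht). apply (im_le_Cmod (phi (polar rho t) - phi (polar rho t0))%C).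
Qed.

Lemma ex_RInt_I_integrand phi dl k r a b : analytic_on_disc phi -> maps_disc_to_disc phi -> 0 < r < 1 -> 0 < dl * r < 1 ->
  ex_RInt (I_integrand phi dl k r) a b.
Proof. intros Ha Hs Hr Hdr. apply (@ex_RInt_continuous R_CompleteNormedModule). intros z _.
  apply continuity_pt_filterlim.
  set (Dt := fun t => (RC 1 - Cconj (wr k r) * phi (polar (1 - dl * r) t))%C).
  assert (CD : ccont Dt).
  { unfold Dt. apply ccont_minus. apply ccont_const. apply ccont_mult. apply ccont_const.
    apply ccont_comp_polar; auto. lra. }
  assert (NZ : forall t, Cnorm2 (Dt t) <> 0).
  { intro t. rewrite Cnorm2_Cmod. apply Rgt_not_eq.
    assert (Hz : Cmod (polar (1 - dl * r) t) < 1) by (rewrite Cmod_polar, Rabs_right; lra).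
    assert (0 < Cmod (Dt t)) by (apply Cmod_gt_0, one_sub_conj_wr_phi_neq0; auto). nra. }
  assert (E : I_integrand phi dl k r = fun t => r * (2 - r) / (fst (Dt t) * fst (Dt t) + snd (Dt t) * snd (Dt t))).
  { apply functional_extensionality. intro t. rewrite I_integrand_eq by auto. reflexivity. }
  rewrite E. destruct (CD z) as [C1 C2].
  apply (continuity_pt_div (fun _ => r * (2 - r)) (fun t => fst (Dt t) * fst (Dt t) + snd (Dt t) * snd (Dt t))).
  apply continuity_pt_const; intros x y; reflexivity.
  apply (continuity_pt_plus (fun t => fst (Dt t) * fst (Dt t)) (fun t => snd (Dt t) * snd (Dt t))).
  apply (continuity_pt_mult (fun t => fst (Dt t)) (fun t => fst (Dt t))); auto.
  apply (continuity_pt_mult (fun t => snd (Dt t)) (fun t => snd (Dt t))); auto.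
  apply (NZ z).
Qed.

Definition limit_value (m dl k A B : R) : R :=
  m * m / (PI * (m + dl)) * (atan ((B - m * k) / (m + dl)) - atan ((A - m * k) / (m + dl))).

Lemma RInt_lorentz m dl k r A B : 0 <= m -> 0 < dl -> 0 < r ->
  RInt (fun t => lorentz m dl k (t / r) / r) (r * A) (r * B) =
  2 * m * m / (m + dl) * (atan ((B - m * k) / (m + dl)) - atan ((A - m * k) / (m + dl))).
Proof. intros Hm Hd Hr.
  assert (Hmd : 0 < m + dl) by lra.
  set (F := fun t => 2 * m * m / (m + dl) * atan ((t / r - m * k) / (m + dl))).
  assert (Hpos : forall s, (m + dl) * (m + dl) + (m * k - s) * (m * k - s) <> 0).
  { intro s. apply Rgt_not_eq. assert (0 < (m + dl) * (m + dl)) by (apply Rmult_lt_0_compat; lra).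
    assert (0 <= (m * k - s) * (m * k - s)) by apply Rle_0_sqr. lra. }
  assert (Hi : is_RInt (fun t => lorentz m dl k (t / r) / r) (r * A) (r * B) (minus (F (r * B)) (F (r * A)))).
  { apply (@is_RInt_derive R_CompleteNormedModule).
    - intros x _. unfold F, lorentz. auto_derive. auto.
      field. split. apply Rgt_not_eq; lra. split. 2: apply Rgt_not_eq; lra.
      apply Rgt_not_eq. assert (0 < (m + dl) * (m + dl) * (r * r)) by (repeat apply Rmult_lt_0_compat; lra).
      assert (0 <= (m * k * r - x) * (m * k * r - x)) by apply Rle_0_sqr. lra.
    - intros x _. apply (@ex_derive_continuous R_AbsRing R_NormedModule). unfold lorentz. auto_derive.
      apply (Hpos (x / r)). }
  rewrite (is_RInt_unique _ _ _ _ Hi). unfold minus, plus, opp. simpl. unfold F.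
  replace (r * B / r) with B by (field; lra). replace (r * A / r) with A by (field; lra). ring.
Qed.

Lemma ex_RInt_lorentz m dl k r a b : 0 <= m -> 0 < dl -> 0 < r -> ex_RInt (fun t => lorentz m dl k (t / r) / r) a b.
Proof. intros Hm Hd Hr. apply (@ex_RInt_continuous R_CompleteNormedModule). intros x _.
  apply (@ex_derive_continuous R_AbsRing R_NormedModule). unfold lorentz. auto_derive.
  apply Rgt_not_eq.
  assert (0 < (m + dl) * (m + dl)) by (apply Rmult_lt_0_compat; lra).
  assert (0 <= (m * k + - (x * / r)) * (m * k + - (x * / r))) by apply Rle_0_sqr. lra. Qed.

Lemma abs_RInt_sub_rescaled (f g : R -> R) r A B e : 0 < r -> A <= B ->
  ex_RInt f (r * A) (r * B) -> ex_RInt (fun t => g (t / r) / r) (r * A) (r * B) ->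
  (forall s, A <= s <= B -> Rabs (r * f (r * s) - g s) <= e) ->
  Rabs (RInt f (r * A) (r * B) - RInt (fun t => g (t / r) / r) (r * A) (r * B)) <= (B - A) * e.
Proof.
  intros Hr HAB Hf Hg Hfg.
  assert (EM := RInt_minus (V := R_CompleteNormedModule) _ _ _ _ Hf Hg).
  unfold minus, plus, opp in EM. simpl in EM. unfold Rminus at 1. rewrite <- EM.
  replace ((B - A) * e) with ((r * B - r * A) * (e / r)) by (field; lra).
  apply abs_RInt_le_const; [nra|apply (@ex_RInt_minus R_CompleteNormedModule); auto|].
  intros t Ht. assert (Hs : A <= t / r <= B).
  { split; apply Rmult_le_reg_l with r; try lra; replace (r * (t / r)) with t by (field; lra); lra. }
  specialize (Hfg (t / r) Hs). replace (r * (t / r)) with t in Hfg by (field; lra).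
  replace (f t + - (g (t / r) / r)) with ((r * f t - g (t / r)) / r) by (field; lra).
  unfold Rdiv. rewrite Rabs_mult, Rabs_inv, (Rabs_right r) by lra.
  apply Rmult_le_compat_r; [apply Rlt_le, Rinv_0_lt_compat; lra|exact Hfg].
Qed.

Lemma I_tends_to_limit_value_of_repr phi Lam m c0 a dl k lam : analytic_on_disc phi -> maps_disc_to_disc phi ->
  0 <= m -> 0 < dl -> 0 < lam ->
  (forall z, Cmod z < 1 -> cayley phi z = (herglotz Lam z + (0, c0))%C) ->
  vanishes_at_1_weighted (hdefect Lam m) ->
  I_tends_to phi a dl k lam (limit_value m dl k (k * a - lam) (k * a + lam)).
Proof.
  intros Ha Hs Hm Hd Hl HF HE eps He. assert (HP := PI_RGT_0).
  set (A := k * a - lam). set (B := k * a + lam).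
  set (e1 := eps * PI / (lam + 1)). assert (He1 : 0 < e1) by (unfold e1; apply Rdiv_lt_0_compat; nra).
  destruct (r_integrand_ulim phi Lam m c0 dl k A B Hs Hm Hd HF HE e1 He1) as [d [Hd0 K]].
  set (r0 := Rmin d (Rmin (1 / 2) (/ (2 * dl)))).
  assert (Hr0 : 0 < r0) by (apply Rmin_pos; auto; apply Rmin_pos; [lra|apply Rinv_0_lt_compat; lra]).
  exists r0. split; auto. intros r Hr.
  assert (R1 : r < d) by (generalize (Rmin_l d (Rmin (1 / 2) (/ (2 * dl)))); unfold r0 in Hr; lra).
  assert (R2 : r < 1 / 2) by (generalize (Rmin_r d (Rmin (1 / 2) (/ (2 * dl)))) (Rmin_l (1 / 2) (/ (2 * dl))); unfold r0 in Hr; lra).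
  assert (R3 : r < / (2 * dl)) by (generalize (Rmin_r d (Rmin (1 / 2) (/ (2 * dl)))) (Rmin_r (1 / 2) (/ (2 * dl))); unfold r0 in Hr; lra).
  assert (Hr1 : 0 < r < 1) by lra.
  assert (Hdr : 0 < dl * r < 1).
  { split; [nra|]. apply Rmult_lt_compat_l with (r := dl) in R3; [|lra].
    replace (dl * / (2 * dl)) with (1 / 2) in R3 by (field; lra). lra. }
  assert (HI := ex_RInt_I_integrand phi dl k r (r * A) (r * B) Ha Hs Hr1 Hdr).
  exists (ex_RInt_Reals_0 _ _ _ (ex_RInt_I_integrand phi dl k r _ _ Ha Hs Hr1 Hdr)).
  rewrite <- RInt_Reals.
  replace (k * r * a - lam * r) with (r * A) by (unfold A; ring).
  replace (k * r * a + lam * r) with (r * B) by (unfold B; ring).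
  assert (EL : limit_value m dl k A B = / (2 * PI) * RInt (fun t => lorentz m dl k (t / r) / r) (r * A) (r * B)).
  { rewrite RInt_lorentz by lra. unfold limit_value. field. lra. }
  fold A B. rewrite EL, <- Rmult_minus_distr_l, Rabs_mult, Rabs_right by (apply Rle_ge, Rlt_le, Rinv_0_lt_compat; lra).
  assert (Bd := abs_RInt_sub_rescaled (I_integrand phi dl k r) (lorentz m dl k) r A B e1 ltac:(lra)
    ltac:(unfold A, B; lra) HI (ex_RInt_lorentz m dl k r _ _ Hm Hd (proj1 Hr))
    (fun s Hs => Rlt_le _ _ (K r s (conj (proj1 Hr) R1) Hs))).
  replace (B - A) with (2 * lam) in Bd by (unfold A, B; ring).
  apply Rle_lt_trans with (/ (2 * PI) * (2 * lam * e1)); [apply Rmult_le_compat_l; [apply Rlt_le, Rinv_0_lt_compat; lra|exact Bd]|].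
  replace (/ (2 * PI) * (2 * lam * e1)) with (eps * (lam / (lam + 1))) by (unfold e1; field; lra).
  assert (lam / (lam + 1) < 1) by (apply Rmult_lt_reg_r with (lam + 1); [lra|]; unfold Rdiv; rewrite Rmult_assoc, Rinv_l; lra).
  nra.
Qed.

(** * Evaluation of the limit *)

Lemma I_tends_to_limit_value phi a Lam m : analytic_on_disc phi -> maps_disc_to_disc phi ->
  is_clark_functional phi (Defs.RtoC 1) Lam -> point_mass_at_1 Lam m ->
  forall dl k lam, 0 < dl -> 0 < lam -> I_tends_to phi a dl k lam (limit_value m dl k (k * a - lam) (k * a + lam)).
Proof. intros Ha Hs Hc Hm dl k lam Hd Hl.
  assert (HL := proj1 Hc). assert (m0 := point_mass_ge0 Lam m HL Hm).
  destruct (cayley_herglotz_repr Lam phi Ha Hs Hc) as [c0 HF].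
  apply (I_tends_to_limit_value_of_repr phi Lam m c0 a dl k lam Ha Hs m0 Hd Hl HF (hdefect_small Lam m HL Hm)).
Qed.

Lemma atan_diff_le (T p q : R) : 0 <= T ->
  (forall c, Rmin p q <= c <= Rmax p q -> T <= Rabs c) ->
  Rabs (atan p - atan q) <= Rabs (p - q) / (1 + T * T).
Proof.
  intros HT Hc.
  destruct (MVT_abs atan (fun c => / (1 + c ^ 2)) q p) as [c [Ediff Hcqp]].
  { intros c _. apply derivable_pt_lim_atan. }
  assert (Hc' : Rmin p q <= c <= Rmax p q) by (rewrite Rmin_comm, Rmax_comm; exact Hcqp).
  assert (Tc : T * T <= c ^ 2).
  { specialize (Hc c Hc'). rewrite <- Rsqr_pow2, Rsqr_abs. unfold Rsqr. nra. }
  rewrite Ediff, Rabs_right by (left; apply Rinv_0_lt_compat; nra).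
  rewrite Rmult_comm. unfold Rdiv. apply Rmult_le_compat_l; [apply Rabs_pos|].
  apply Rinv_le_contravar; nra.
Qed.

Lemma atan_le_id x : 0 <= x -> atan x <= x.
Proof.
  intros Hx. assert (D := atan_diff_le 0 x 0 (Rle_refl 0) (fun c _ => Rabs_pos c)).
  rewrite atan_0, !Rminus_0_r, Rmult_0_r, Rplus_0_r, Rdiv_1_r, (Rabs_right x) in D by lra.
  apply Rabs_le_between in D. lra.
Qed.

Lemma atan_diff_le_far (T p q : R) : 0 <= T ->
  (T <= p /\ T <= q) \/ (p <= - T /\ q <= - T) ->
  Rabs (atan p - atan q) <= Rabs (p - q) / (1 + T * T).
Proof.
  intros HT Hpq. apply atan_diff_le; auto. intros c [Hc1 Hc2].
  destruct Hpq as [[Hp Hq] | [Hp Hq]].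
  - assert (T <= Rmin p q) by (apply Rmin_glb; lra). rewrite Rabs_right; lra.
  - assert (Rmax p q <= - T) by (apply Rmax_lub; lra). rewrite Rabs_left1; lra.
Qed.

Lemma atan_scaled_bounds x : 0 < x -> 0 < 2 / PI * atan x < 1.
Proof.
  intros Hx. assert (HP := PI_RGT_0).
  assert (P : 0 < atan x) by (rewrite <- atan_0; apply atan_increasing; lra).
  assert (Q := atan_bound x).
  split; [apply Rmult_lt_0_compat; [apply Rdiv_lt_0_compat|]; lra|].
  apply Rmult_lt_reg_r with (PI / 2); [lra|].
  replace (2 / PI * atan x * (PI / 2)) with (atan x) by (field; lra). lra.
Qed.

(* [1 - 2 / pi atan x = 2 / pi atan (1 / x) <= 1 / x]. *)
Lemma atan_scaled_cvg_1 b : 0 < b -> forall eps, 0 < eps -> exists M, 0 < M /\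
  forall lam, M < lam -> Rabs (2 / PI * atan (lam / b) - 1) < eps.
Proof.
  intros Hb eps He. assert (HP := PI_RGT_0). assert (HP2 := PI2_1).
  exists (b / eps). split; [apply Rdiv_lt_0_compat; lra|]. intros lam Hlam.
  assert (Hl : 0 < lam) by (eapply Rlt_trans; [|exact Hlam]; apply Rdiv_lt_0_compat; lra).
  assert (Hbl : 0 < b / lam) by (apply Rdiv_lt_0_compat; lra).
  assert (Hsmall : b / lam < eps).
  { apply Rmult_lt_reg_r with (lam / eps); [apply Rdiv_lt_0_compat; lra|].
    replace (b / lam * (lam / eps)) with (b / eps) by (field; lra).
    replace (eps * (lam / eps)) with lam by (field; lra). exact Hlam. }
  assert (E : 2 / PI * atan (lam / b) - 1 = - (2 / PI * atan (b / lam))).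
  { rewrite <- (Rinv_div b lam), atan_inv by exact Hbl. field. lra. }
  assert (A1 := atan_le_id (b / lam) (Rlt_le _ _ Hbl)).
  assert (A2 := proj1 (atan_scaled_bounds (b / lam) Hbl)).
  rewrite E, Rabs_Ropp, Rabs_right by lra.
  apply Rle_lt_trans with (2 / PI * (b / lam)); [apply Rmult_le_compat_l; [apply Rlt_le, Rdiv_lt_0_compat|]; lra|].
  apply Rle_lt_trans with (b / lam); [|exact Hsmall].
  rewrite <- (Rmult_1_l (b / lam)) at 2. apply Rmult_le_compat_r; [lra|].
  apply Rmult_le_reg_r with PI; [lra|]. replace (2 / PI * PI) with 2 by (field; lra). lra.
Qed.

Lemma limit_value_at_atom a dl k lam : 0 < a -> 0 < dl ->
  limit_value a dl k (k * a - lam) (k * a + lam) = a * (2 / PI * atan (lam / (a + dl))) / (1 + dl / a).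
Proof.
  intros Ha Hd. assert (HP := PI_RGT_0). unfold limit_value.
  replace ((k * a + lam - a * k) / (a + dl)) with (lam / (a + dl)) by (field; lra).
  replace ((k * a - lam - a * k) / (a + dl)) with (- (lam / (a + dl))) by (field; lra).
  rewrite atan_opp. field. lra.
Qed.

(* Both arguments of [atan] in [limit_value] are [(kappa (a - m) +- lambda) / (m + delta)]: at
   distance [2 lambda / (m + delta)] apart and of modulus at least [T] once [kappa] is large. *)
Lemma limit_value_vanishes m a dl lam : 0 <= m -> m <> a -> 0 < dl -> 0 < lam ->
  forall eps, 0 < eps -> exists K, 0 < K /\
    forall k, K < k -> Rabs (limit_value m dl k (k * a - lam) (k * a + lam)) < eps.
Proof.
  intros Hm Hma Hd Hl eps He. assert (HP := PI_RGT_0).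
  assert (Hmd : 0 < m + dl) by lra.
  assert (Ham : 0 < Rabs (a - m)) by (apply Rabs_pos_lt; lra).
  set (C := m * m / (PI * (m + dl))).
  assert (HC : 0 <= C) by (apply Rmult_le_pos; [nra|apply Rlt_le, Rinv_0_lt_compat; nra]).
  set (X := 2 * lam / (m + dl)). assert (HX : 0 < X) by (apply Rdiv_lt_0_compat; lra).
  set (T0 := C * X / eps + 1). assert (HT0 : 1 <= T0) by (unfold T0; assert (0 <= C * X / eps) by (apply Rmult_le_pos; [nra|apply Rlt_le, Rinv_0_lt_compat; lra]); lra).
  set (K := ((m + dl) * T0 + lam) / Rabs (a - m)).
  exists K. split; [apply Rdiv_lt_0_compat; nra|]. intros k Hk.
  set (T := (k * Rabs (a - m) - lam) / (m + dl)).
  assert (HT : T0 < T).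
  { unfold T. apply Rmult_lt_reg_r with (m + dl); [lra|]. replace ((k * Rabs (a - m) - lam) / (m + dl) * (m + dl)) with (k * Rabs (a - m) - lam) by (field; lra).
    apply (Rmult_lt_compat_r (Rabs (a - m))) in Hk; [|lra]. unfold K in Hk.
    replace (((m + dl) * T0 + lam) / Rabs (a - m) * Rabs (a - m)) with ((m + dl) * T0 + lam) in Hk by (field; lra). lra. }
  set (p := (k * a + lam - m * k) / (m + dl)). set (q := (k * a - lam - m * k) / (m + dl)).
  assert (Epq : Rabs (p - q) = X).
  { replace (p - q) with X by (unfold p, q, X; field; lra). apply Rabs_right; lra. }
  assert (Far : (T <= p /\ T <= q) \/ (p <= - T /\ q <= - T)).
  { destruct (Rle_dec m a).
    - left. assert (E : Rabs (a - m) = a - m) by (apply Rabs_right; lra).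
      assert (p = T + X) by (unfold p, T, X; rewrite E; field; lra).
      assert (q = T) by (unfold q, T; rewrite E; field; lra). lra.
    - right. assert (E : Rabs (a - m) = m - a) by (rewrite Rabs_left; lra).
      assert (p = - T) by (unfold p, T; rewrite E; field; lra).
      assert (q = - T - X) by (unfold q, T, X; rewrite E; field; lra). lra. }
  assert (D := atan_diff_le_far T p q ltac:(lra) Far). rewrite Epq in D.
  unfold limit_value. fold C p q. rewrite Rabs_mult, (Rabs_right C) by lra.
  apply Rle_lt_trans with (C * (X / (1 + T * T))); [apply Rmult_le_compat_l; lra|].
  assert (Hden : T < 1 + T * T) by nra.
  apply Rle_lt_trans with (C * X / T).
  - unfold Rdiv. rewrite <- Rmult_assoc. apply Rmult_le_compat_l; [nra|].
    apply Rinv_le_contravar; lra.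
  - apply Rmult_lt_reg_r with (T / eps); [apply Rdiv_lt_0_compat; lra|].
    replace (C * X / T * (T / eps)) with (C * X / eps) by (field; lra).
    replace (eps * (T / eps)) with T by (field; lra). unfold T0 in HT. lra.
Qed.

Theorem lemma3p3 (phi : Cx -> Cx) (a : R)
  (Hana : analytic_on_disc phi) (Hself : maps_disc_to_disc phi) (ha : 0 < a) :
  ((exists Lam, is_clark_functional phi (RtoC 1) Lam /\ point_mass_at_1 Lam a) ->
   exists c : R -> R -> R,
     (forall delta lambda, 0 < delta -> 0 < lambda ->
        0 < c delta lambda < 1) /\
     (forall delta, 0 < delta -> forall eps, 0 < eps -> exists M, 0 < M /\
        forall lambda, M < lambda -> Rabs (c delta lambda - 1) < eps) /\
     (forall delta kappa lambda, 0 < delta -> 0 < kappa -> 0 < lambda ->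
        I_tends_to phi a delta kappa lambda
          (a * c delta lambda / (1 + delta / a))))
  /\
  ((exists Lam m, is_clark_functional phi (RtoC 1) Lam /\ point_mass_at_1 Lam m /\ m <> a) ->
   exists epsf : R -> R -> R -> R,
     (forall delta kappa lambda, 0 < delta -> 0 < kappa -> 0 < lambda ->
        I_tends_to phi a delta kappa lambda (epsf delta kappa lambda)) /\
     (forall delta lambda, 0 < delta -> 0 < lambda ->
        forall eps, 0 < eps -> exists K, 0 < K /\
          forall kappa, K < kappa -> Rabs (epsf delta kappa lambda) < eps)).
Proof.
  split.
  - intros [Lam [Hc Hm]].
    exists (fun dl lam => 2 / PI * atan (lam / (a + dl))). split; [|split].
    + intros dl lam Hd Hl. apply atan_scaled_bounds, Rdiv_lt_0_compat; lra.
    + intros dl Hd. apply atan_scaled_cvg_1. lra.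
    + intros dl k lam Hd _ Hl. rewrite <- (limit_value_at_atom a dl k lam) by lra.
      exact (I_tends_to_limit_value phi a Lam a Hana Hself Hc Hm dl k lam Hd Hl).
  - intros [Lam [m [Hc [Hm Hma]]]].
    exists (fun dl k lam => limit_value m dl k (k * a - lam) (k * a + lam)). split.
    + intros dl k lam Hd _ Hl. exact (I_tends_to_limit_value phi a Lam m Hana Hself Hc Hm dl k lam Hd Hl).
    + intros dl lam Hd Hl. apply limit_value_vanishes; auto.
      exact (point_mass_ge0 Lam m (proj1 Hc) Hm).
Qed.
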